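(* Let $t_0\in\mathbb{R}$ and let $C$ be the third-order linear time-varying system $$c_3(t)y'''(t)+c_2(t)y''(t)+c_1(t)y'(t)+c_0(t)y(t)=x(t),\qquad t\ge t_0,$$ with $c_3(t)\neq 0$ for all $t\ge t_0$ and coefficients differentiable as often as needed below. Then: (i) $C$ can be decomposed as the cascade connection of a commutative pair consisting of a first-order system $A:\ a_1y_A'+a_0y_A=x_A$ and a second-order system $B:\ b_2y_B''+b_1y_B'+b_0y_B=x_B$ (with $a_1\neq0$, $b_2\neq 0$) if and only if there exist real constants $e_2\neq 0$, $e_1$, $e_0$ such that, defining $$a_1=\Big(\frac{c_3}{e_2}\Big)^{1/3},\qquad a_0=\frac{c_2-c_3'}{3e_2^{1/3}c_3^{2/3}}-\frac{e_1}{3e_2},$$ $$b_2=e_2a_1^2,\qquad b_1=e_2(a_1'+2a_0)a_1+e_1a_1,\qquad b_0=e_2(a_0'a_1+a_0^2)+e_1a_0+e_0,$$ the remaining coefficients of $C$ satisfy $$c_1=a_1b_1'+a_1b_0+a_0b_1,\qquad c_0=a_1b_0'+a_0b_0$$ (i.e. $c_1$ and $c_0$ are expressible in terms of $c_3$, $c_2$ and the constants $e_2,e_1,e_0$ through these formulas). (ii) If moreover the initial value $y(t_0)$ of $C$ is nonzero, the additional necessary and sufficient conditions for this decomposition to hold including initial conditions are $$e_2+e_1+e_0=1,$$ $$y_A(t_0)=y_B(t_0)=y(t_0),\qquad y'(t_0)=y_B'(t_0)=P(t_0)\,y(t_0),\qquad y''(t_0)=\big(P(t_0)^2+P'(t_0)\big)\,y(t_0),$$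 where $$P(t)=\Big(\frac{e_2}{c_3(t)}\Big)^{1/3}\Big(1+\frac{e_1}{3e_2}\Big)-\frac{c_2(t)-c_3'(t)}{3c_3(t)}.$$
   Context: Systems. A first-order system $A$ is $a_1(t)y_A'(t)+a_0(t)y_A(t)=x_A(t)$ with $a_1(t)\neq0$, $a_i$ twice differentiable, initial value $y_A(t_0)$; a second-order system $B$ is $b_2(t)y_B''(t)+b_1(t)y_B'(t)+b_0(t)y_B(t)=x_B(t)$ with $b_2(t)\neq0$, $b_i$ once differentiable, initial values $y_B(t_0),y_B'(t_0)$; inputs are piecewise continuous on $[t_0,\infty)$. The cascade connection $AB$ is defined by $x_A=x$, $x_B=y_A$, output $y=y_B$; the cascade connection $BA$ by $x_B=x$, $x_A=y_B$, output $y=y_A$ (both with the same subsystem initial values $y_A(t_0),y_B(t_0),y_B'(t_0)$). $A$ and $B$ are a commutative pair if $AB$ and $BA$ have the same input-output relation (same output for every input and the given initial conditions). $C$ is decomposed into the commutative pair $A,B$ if $AB$ and $BA$ are commutative and both give the same output as $C$ for every input $x$ (with $C$'s initial values $y(t_0),y'(t_0),y''(t_0)$ corresponding to those of the subsystems in part (ii); with zero/unconstrained initial data in part (i), i.e. the differential equations coincide). $(\cdot)^{1/3}$ denotes the real cube root; primes denote derivatives in $t$. *)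

From Stdlib Require Import Reals.
From Coquelicot Require Import Coquelicot.
Open Scope R_scope.

Definition cbrt (x : R) : R :=
  if Rlt_dec 0 x then Rpower x (1/3)
  else if Rlt_dec x 0 then - Rpower (- x) (1/3) else 0.

(** Regularity of coefficient functions on [t0, oo) (two-sided derivatives
    at every point t >= t0). *)
Definition smooth_from (t0 : R) (f : R -> R) : Prop :=
  forall (n : nat) (t : R), t0 <= t -> ex_derive (Derive_n f n) t.
Definition diff1_from (t0 : R) (f : R -> R) : Prop :=
  forall t, t0 <= t -> ex_derive f t.
Definition diff2_from (t0 : R) (f : R -> R) : Prop :=
  forall t, t0 <= t -> ex_derive f t /\ ex_derive (Derive f) t.

(** Coefficients of the differential equation of the cascade AB,
    i.e. of  A(B y) = x  with  B y = b2 y'' + b1 y' + b0 y,  A u = a1 u' + a0 u. *)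
Definition AB3 (a1 a0 b2 b1 b0 : R -> R) (t : R) := a1 t * b2 t.
Definition AB2 (a1 a0 b2 b1 b0 : R -> R) (t : R) :=
  a1 t * (Derive b2 t + b1 t) + a0 t * b2 t.
Definition AB1 (a1 a0 b2 b1 b0 : R -> R) (t : R) :=
  a1 t * (Derive b1 t + b0 t) + a0 t * b1 t.
Definition AB0 (a1 a0 b2 b1 b0 : R -> R) (t : R) :=
  a1 t * Derive b0 t + a0 t * b0 t.

(** Coefficients of the differential equation of the cascade BA,
    i.e. of  B(A y) = x. *)
Definition BA3 (a1 a0 b2 b1 b0 : R -> R) (t : R) := b2 t * a1 t.
Definition BA2 (a1 a0 b2 b1 b0 : R -> R) (t : R) :=
  b2 t * (2 * Derive a1 t + a0 t) + b1 t * a1 t.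
Definition BA1 (a1 a0 b2 b1 b0 : R -> R) (t : R) :=
  b2 t * (Derive (Derive a1) t + 2 * Derive a0 t)
  + b1 t * (Derive a1 t + a0 t) + b0 t * a1 t.
Definition BA0 (a1 a0 b2 b1 b0 : R -> R) (t : R) :=
  b2 t * Derive (Derive a0) t + b1 t * Derive a0 t + b0 t * a0 t.

(** Part (i) notion: C is decomposed into the commutative pair A, B with
    unconstrained initial data, i.e. the differential equations of AB, of BA
    and of C coincide on [t0, oo). *)
Definition decomposed_eq (t0 : R) (c3 c2 c1 c0 a1 a0 b2 b1 b0 : R -> R) : Prop :=
  forall t, t0 <= t ->
    (AB3 a1 a0 b2 b1 b0 t = c3 t /\ AB2 a1 a0 b2 b1 b0 t = c2 t /\
     AB1 a1 a0 b2 b1 b0 t = c1 t /\ AB0 a1 a0 b2 b1 b0 t = c0 t) /\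
    (BA3 a1 a0 b2 b1 b0 t = c3 t /\ BA2 a1 a0 b2 b1 b0 t = c2 t /\
     BA1 a1 a0 b2 b1 b0 t = c1 t /\ BA0 a1 a0 b2 b1 b0 t = c0 t).

Definition a1f (e2 : R) (c3 : R -> R) (t : R) : R := cbrt (c3 t / e2).
Definition a0f (e2 e1 : R) (c3 c2 : R -> R) (t : R) : R :=
  (c2 t - Derive c3 t) / (3 * cbrt e2 * (cbrt (c3 t)) ^ 2) - e1 / (3 * e2).
Definition b2f (e2 : R) (c3 : R -> R) (t : R) : R := e2 * (a1f e2 c3 t) ^ 2.
Definition b1f (e2 e1 : R) (c3 c2 : R -> R) (t : R) : R :=
  e2 * (Derive (a1f e2 c3) t + 2 * a0f e2 e1 c3 c2 t) * a1f e2 c3 t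
  + e1 * a1f e2 c3 t.
Definition b0f (e2 e1 e0 : R) (c3 c2 : R -> R) (t : R) : R :=
  e2 * (Derive (a0f e2 e1 c3 c2) t * a1f e2 c3 t + (a0f e2 e1 c3 c2 t) ^ 2)
  + e1 * a0f e2 e1 c3 c2 t + e0.

Definition coeff_cond (t0 : R) (c3 c2 c1 c0 : R -> R) (e2 e1 e0 : R) : Prop :=
  forall t, t0 <= t ->
    c1 t = a1f e2 c3 t * Derive (b1f e2 e1 c3 c2) t
           + a1f e2 c3 t * b0f e2 e1 e0 c3 c2 t
           + a0f e2 e1 c3 c2 t * b1f e2 e1 c3 c2 t /\
    c0 t = a1f e2 c3 t * Derive (b0f e2 e1 e0 c3 c2) t
           + a0f e2 e1 c3 c2 t * b0f e2 e1 e0 c3 c2 t.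

Definition Pf (e2 e1 : R) (c3 c2 : R -> R) (t : R) : R :=
  cbrt (e2 / c3 t) * (1 + e1 / (3 * e2)) - (c2 t - Derive c3 t) / (3 * c3 t).

Definition pwc (t0 : R) (x : R -> R) : Prop :=
  forall T, t0 < T ->
    exists (n : nat) (s : nat -> R),
      s O = t0 /\ s n = T /\
      forall i, (i < n)%nat ->
        s i < s (S i) /\
        (forall u, s i < u < s (S i) -> continuous x u) /\
        (exists l : R, filterlim x (at_right (s i)) (locally l)) /\
        (exists l : R, filterlim x (at_left (s (S i))) (locally l)).

(** Solutions on [t0, oo) (Caratheodory / integral form, appropriate for
    piecewise continuous forcing), with prescribed initial values. *)
Definition sol1 (t0 : R) (a1 a0 x : R -> R) (y0 : R) (y : R -> R) : Prop :=
  y t0 = y0 /\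
  forall t, t0 <= t ->
    ex_RInt (fun s => (x s - a0 s * y s) / a1 s) t0 t /\
    y t = y0 + RInt (fun s => (x s - a0 s * y s) / a1 s) t0 t.

Definition sol2 (t0 : R) (b2 b1 b0 x : R -> R) (y0 y1 : R) (y : R -> R) : Prop :=
  exists z : R -> R,
    y t0 = y0 /\ z t0 = y1 /\
    forall t, t0 <= t ->
      ex_RInt z t0 t /\ y t = y0 + RInt z t0 t /\
      ex_RInt (fun s => (x s - b1 s * z s - b0 s * y s) / b2 s) t0 t /\
      z t = y1 + RInt (fun s => (x s - b1 s * z s - b0 s * y s) / b2 s) t0 t.

Definition sol3 (t0 : R) (c3 c2 c1 c0 x : R -> R) (y0 y1 y2 : R) (y : R -> R)
  : Prop :=
  exists z1 z2 : R -> R,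
    y t0 = y0 /\ z1 t0 = y1 /\ z2 t0 = y2 /\
    forall t, t0 <= t ->
      ex_RInt z1 t0 t /\ y t = y0 + RInt z1 t0 t /\
      ex_RInt z2 t0 t /\ z1 t = y1 + RInt z2 t0 t /\
      ex_RInt (fun s => (x s - c2 s * z2 s - c1 s * z1 s - c0 s * y s) / c3 s) t0 t /\
      z2 t = y2 + RInt (fun s => (x s - c2 s * z2 s - c1 s * z1 s - c0 s * y s) / c3 s) t0 t.

Definition outAB (t0 : R) (a1 a0 b2 b1 b0 : R -> R) (yA0 yB0 yB1 : R)
  (x y : R -> R) : Prop :=
  exists yA : R -> R, sol1 t0 a1 a0 x yA0 yA /\ sol2 t0 b2 b1 b0 yA yB0 yB1 y.
Definition outBA (t0 : R) (a1 a0 b2 b1 b0 : R -> R) (yA0 yB0 yB1 : R)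
  (x y : R -> R) : Prop :=
  exists yB : R -> R, sol2 t0 b2 b1 b0 x yB0 yB1 yB /\ sol1 t0 a1 a0 yB yA0 y.
Definition outC (t0 : R) (c3 c2 c1 c0 : R -> R) (y0 y1 y2 : R)
  (x y : R -> R) : Prop :=
  sol3 t0 c3 c2 c1 c0 x y0 y1 y2 y.

Definition decomposed_ic (t0 : R) (c3 c2 c1 c0 a1 a0 b2 b1 b0 : R -> R)
  (y0 y1 y2 yA0 yB0 yB1 : R) : Prop :=
  (forall x, pwc t0 x -> forall y,
     outAB t0 a1 a0 b2 b1 b0 yA0 yB0 yB1 x y <-> outBA t0 a1 a0 b2 b1 b0 yA0 yB0 yB1 x y) /\
  (forall x, pwc t0 x -> forall y,
     outAB t0 a1 a0 b2 b1 b0 yA0 yB0 yB1 x y <-> outC t0 c3 c2 c1 c0 y0 y1 y2 x y) /\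
  (forall x, pwc t0 x -> forall y,
     outBA t0 a1 a0 b2 b1 b0 yA0 yB0 yB1 x y <-> outC t0 c3 c2 c1 c0 y0 y1 y2 x y).

From Stdlib Require Import Reals Lra Lia.
From Coquelicot Require Import Coquelicot.
Open Scope R_scope.

(* Write [A u = a1 u' + a0 u] and [B y = b2 y'' + b1 y' + b0 y]; the cascades
   AB and BA are the third-order operators with coefficients [AB3 .. AB0] and
   [BA3 .. BA0].  Equating them gives three linear first-order equations for
   [b2, b1, b0], which integrate to [b2 = e2 a1^2],
   [b1 = e2 (a1' + 2 a0) a1 + e1 a1] and [b0 = e2 (a0' a1 + a0^2) + e1 a0 + e0].
   Then [c3 = e2 a1^3] and [c2 = BA2] determine [a1] and [a0], and [c1], [c0]
   must be the remaining coefficients of AB.  Conversely these formulas define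
   a commuting pair, once [a1] and [a0] are continued to the left of [t0] so as
   to be twice differentiable there.

   With initial conditions, AB has the input-output relation of C as soon as
   [yB], [yB'] start from [y(t0)], [y'(t0)] and [yA] from [(B y)(t0)], and BA as
   soon as [yA] starts from [y(t0)] and [yB], [yB'] from [(A y)(t0)],
   [(A y)'(t0)]; feeding C the input whose output is a quadratic polynomial
   shows that these conditions are also necessary.  When
   [y(t0) <> 0] they say that [y'/y] and [y''/y] at [t0] are those of the
   solutions of [A y = y], and [B y = y] at [t0] then forces
   [e2 + e1 + e0 = 1]. *)

(* [auto_derive] leaves derivatives in the eta-expanded form [Derive (fun x => f x)]. *)
Ltac eta_Derive :=
  repeat match goal with
  | |- context [Derive (fun x => ?f x)] => change (Derive (fun x => f x)) with (Derive f)
  end.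

Ltac neq0 :=
  repeat first [ assumption | apply Rmult_integral_contrapositive_currified
               | apply pow_nonzero | apply Rinv_neq_0_compat | lra ].

(** * Calculus on [[t0, oo)] *)

Lemma locally_gt (a t : R) : a < t -> locally t (fun s => a < s).
Proof.
intros H. assert (Hp : 0 < t - a) by lra. exists (mkposreal _ Hp).
intros s Hs. change (Rabs (s - t) < t - a) in Hs. apply Rabs_lt_between' in Hs. lra.
Qed.

Lemma locally_lt (a t : R) : t < a -> locally t (fun s => s < a).
Proof.
intros H. assert (Hp : 0 < a - t) by lra. exists (mkposreal _ Hp).
intros s Hs. change (Rabs (s - t) < a - t) in Hs. apply Rabs_lt_between' in Hs. lra.
Qed.

Lemma is_derive_eq (f : R -> R) (x l1 l2 : R) :
  is_derive f x l1 -> is_derive f x l2 -> l1 = l2.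
Proof. intros H1 H2. rewrite <- (is_derive_unique _ _ _ H1). apply is_derive_unique, H2. Qed.

(* Coquelicot's [Derive] is a limit of right difference quotients, so it only
   sees the values of [f] on [[t, oo)]. *)
Lemma Derive_ext_from (f g : R -> R) (t : R) :
  (forall s, t <= s -> f s = g s) -> Derive f t = Derive g t.
Proof.
intros H. unfold Derive, Lim. f_equal. apply Lim_seq_ext. intros n. simpl.
assert (0 < / (INR n + 1)) by (apply Rinv_0_lt_compat; pose proof (pos_INR n); lra).
rewrite !H; lra.
Qed.

Lemma zero_derivative_const_from (t0 : R) (k : R -> R) :
  (forall t, t0 <= t -> is_derive k t 0) -> forall t, t0 <= t -> k t = k t0.
Proof.
intros H t Ht.
destruct (MVT_gen k t0 t (fun _ => 0)) as [c [_ Hc]].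
- rewrite Rmin_left, Rmax_right by lra. intros x Hx. apply H; lra.
- rewrite Rmin_left, Rmax_right by lra. intros x Hx. apply continuity_pt_filterlim.
  apply (@ex_derive_continuous R_AbsRing R_NormedModule k x). exists 0. apply H; lra.
- lra.
Qed.

Lemma is_derive_piecewise (u v w : R -> R) (t0 l : R) :
  is_derive u t0 l -> is_derive v t0 l ->
  (forall s, s < t0 -> w s = u s) -> (forall s, t0 <= s -> w s = v s) ->
  u t0 = v t0 -> is_derive w t0 l.
Proof.
intros Hu Hv Hwu Hwv Huv.
apply is_derive_Reals. apply is_derive_Reals in Hu, Hv.
intros eps Heps.
destruct (Hu eps Heps) as [d1 H1]. destruct (Hv eps Heps) as [d2 H2].
assert (Hd : 0 < Rmin d1 d2) by (apply Rmin_pos; apply cond_pos).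
exists (mkposreal _ Hd). intros h Hh Hlt. simpl in Hlt.
pose proof (Rmin_l d1 d2). pose proof (Rmin_r d1 d2).
rewrite (Hwv t0) by lra.
destruct (Rlt_or_le h 0) as [Hn|Hn].
- rewrite Hwu, <- Huv by lra. apply H1; auto; lra.
- rewrite Hwv by lra. apply H2; auto; lra.
Qed.

(* A function known on [[t0, oo)] with derivative [g] there, continued to the
   left of [t0] by its second-order Taylor polynomial at [t0], so that it gets
   two-sided first and second derivatives at [t0]. *)
Definition extend_left (t0 : R) (f g : R -> R) (s : R) : R :=
  if Rle_dec t0 s then f s
  else f t0 + g t0 * (s - t0) + Derive g t0 * (s - t0) ^ 2 / 2.

Lemma extend_left_eq (t0 : R) (f g : R -> R) (t : R) :
  t0 <= t -> extend_left t0 f g t = f t.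
Proof. intros Ht. unfold extend_left. destruct (Rle_dec t0 t); [reflexivity | lra]. Qed.

Lemma diff2_from_extend_left (t0 : R) (f g : R -> R) :
  (forall t, t0 <= t -> is_derive f t (g t)) ->
  (forall t, t0 <= t -> ex_derive g t) ->
  diff2_from t0 (extend_left t0 f g).
Proof.
intros Hf Hg.
set (F := extend_left t0 f g).
set (T := fun s => f t0 + g t0 * (s - t0) + Derive g t0 * (s - t0) ^ 2 / 2).
assert (HFl : forall s, s < t0 -> F s = T s).
{ intros s Hs. unfold F, extend_left. destruct (Rle_dec t0 s); [lra | reflexivity]. }
assert (HFr : forall s, t0 <= s -> F s = f s) by (intros; apply extend_left_eq; auto).
assert (HT : forall s, is_derive T s (g t0 + Derive g t0 * (s - t0))).
{ intros s. unfold T. auto_derive; auto. field. }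
assert (HDl : forall s, s < t0 -> Derive F s = g t0 + Derive g t0 * (s - t0)).
{ intros s Hs. apply is_derive_unique. apply (is_derive_ext_loc T); [|apply HT].
  generalize (locally_lt t0 s Hs). apply filter_imp. intros v Hv. symmetry. apply HFl; auto. }
assert (HDr : forall s, t0 <= s -> Derive F s = g s).
{ intros s Hs. rewrite (Derive_ext_from F f) by (intros; apply HFr; lra).
  apply is_derive_unique, Hf; auto. }
intros t Ht. destruct (Rle_lt_or_eq_dec _ _ Ht) as [Hlt|<-]; split.
- exists (g t). apply (is_derive_ext_loc f); [|apply Hf; lra].
  generalize (locally_gt t0 t Hlt). apply filter_imp. intros s Hs. symmetry. apply HFr. lra.
- exists (Derive g t). apply (is_derive_ext_loc g); [|apply Derive_correct, Hg; lra].
  generalize (locally_gt t0 t Hlt). apply filter_imp. intros s Hs. symmetry. apply HDr. lra.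
- exists (g t0). apply (is_derive_piecewise T f).
  + generalize (HT t0). now replace (g t0 + Derive g t0 * (t0 - t0)) with (g t0) by ring.
  + apply Hf; lra.
  + exact HFl.
  + exact HFr.
  + unfold T. rewrite Rminus_diag. simpl. lra.
- exists (Derive g t0). apply (is_derive_piecewise (fun s => g t0 + Derive g t0 * (s - t0)) g).
  + auto_derive; auto. ring.
  + apply Derive_correct, Hg; lra.
  + exact HDl.
  + exact HDr.
  + ring.
Qed.

(* Continuity on [[t0, oo)], right continuity at [t0]: the values of [f] left of
   [t0] are irrelevant. *)
Definition cont_from (t0 : R) (f : R -> R) : Prop :=
  forall t, t0 <= t -> continuous (fun s => f (Rmax t0 s)) t.

Lemma continuous_Rmax_l (a t : R) : continuous (fun s => Rmax a s) t.
Proof.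
apply continuity_pt_filterlim.
apply (continuity_pt_ext (fun s => (a + s + Rabs (s - a)) / 2)).
- intros s. unfold Rmax. destruct (Rle_dec a s).
  + rewrite Rabs_right by lra. field.
  + rewrite Rabs_left by lra. field.
- apply continuity_pt_div; [|apply continuity_pt_const; intros ?; reflexivity|lra].
  apply continuity_pt_plus; [apply continuity_pt_plus|].
  + apply continuity_pt_const. intros ?; reflexivity.
  + apply continuity_pt_id.
  + apply (continuity_pt_comp (fun s => s - a) Rabs).
    * apply continuity_pt_minus; [apply continuity_pt_id|].
      apply continuity_pt_const. intros ?; reflexivity.
    * apply Rcontinuity_abs.
Qed.

Lemma continuous_Rmin_l (a t : R) : continuous (fun s => Rmin a s) t.
Proof.
apply continuity_pt_filterlim.
apply (continuity_pt_ext (fun s => a + s - Rmax a s)).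
- intros s. unfold Rmin, Rmax. destruct (Rle_dec a s); ring.
- apply continuity_pt_minus; [apply continuity_pt_plus|].
  + apply continuity_pt_const. intros ?; reflexivity.
  + apply continuity_pt_id.
  + apply continuity_pt_filterlim, continuous_Rmax_l.
Qed.

Section ContFrom.

Variable t0 : R.

Lemma cont_from_continuous (f : R -> R) :
  (forall t, t0 <= t -> continuous f t) -> cont_from t0 f.
Proof.
intros H t Ht. apply (continuous_comp (fun s => Rmax t0 s) f).
- apply continuous_Rmax_l.
- rewrite Rmax_right by lra. apply H; auto.
Qed.

Lemma cont_from_ex_derive (f : R -> R) :
  (forall t, t0 <= t -> ex_derive f t) -> cont_from t0 f.
Proof.
intros H. apply cont_from_continuous. intros t Ht.
apply (@ex_derive_continuous R_AbsRing R_NormedModule). auto.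
Qed.

Lemma cont_from_const (c : R) : cont_from t0 (fun _ => c).
Proof. intros t Ht. apply continuous_const. Qed.

Lemma cont_from_id : cont_from t0 (fun s => s).
Proof. apply cont_from_continuous. intros; apply continuous_id. Qed.

Lemma cont_from_plus (f g : R -> R) :
  cont_from t0 f -> cont_from t0 g -> cont_from t0 (fun s => f s + g s).
Proof. intros Hf Hg t Ht. apply (continuous_plus (fun s => f (Rmax t0 s))); auto. Qed.

Lemma cont_from_mult (f g : R -> R) :
  cont_from t0 f -> cont_from t0 g -> cont_from t0 (fun s => f s * g s).
Proof. intros Hf Hg t Ht. apply (continuous_mult (fun s => f (Rmax t0 s))); auto. Qed.

Lemma cont_from_opp (f : R -> R) : cont_from t0 f -> cont_from t0 (fun s => - f s).
Proof. intros Hf t Ht. apply (continuous_opp (fun s => f (Rmax t0 s))); auto. Qed.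

Lemma cont_from_minus (f g : R -> R) :
  cont_from t0 f -> cont_from t0 g -> cont_from t0 (fun s => f s - g s).
Proof. intros Hf Hg. apply cont_from_plus, cont_from_opp; auto. Qed.

Lemma cont_from_inv (f : R -> R) :
  cont_from t0 f -> (forall s, t0 <= s -> f s <> 0) -> cont_from t0 (fun s => / f s).
Proof.
intros Hf Hn t Ht. apply (continuous_Rinv_comp (fun s => f (Rmax t0 s))); auto.
apply Hn, Rmax_l.
Qed.

Lemma cont_from_div (f g : R -> R) :
  cont_from t0 f -> cont_from t0 g -> (forall s, t0 <= s -> g s <> 0) ->
  cont_from t0 (fun s => f s / g s).
Proof. intros Hf Hg Hn. apply cont_from_mult, cont_from_inv; auto. Qed.

Lemma continuous_of_cont_from (f : R -> R) (t : R) :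
  cont_from t0 f -> t0 < t -> continuous f t.
Proof.
intros Hf Ht. apply (continuous_ext_loc _ (fun s => f (Rmax t0 s))).
- generalize (locally_gt t0 t Ht). apply filter_imp. intros s Hs. rewrite Rmax_right; lra.
- apply Hf; lra.
Qed.

Lemma cont_from_at_right (f : R -> R) :
  cont_from t0 f -> filterlim f (at_right t0) (locally (f t0)).
Proof.
intros Hf. apply (filterlim_ext_loc (fun s => f (Rmax t0 s))).
- exists (mkposreal 1 Rlt_0_1). intros s _ Hs.
  rewrite Rmax_right by (apply Rlt_le; exact Hs). reflexivity.
- replace (f t0) with (f (Rmax t0 t0)) by (now rewrite Rmax_left by lra).
  eapply filterlim_filter_le_1; [|exact (Hf t0 (Rle_refl t0))].
  intros P HP. unfold at_right, within. eapply filter_imp; [|exact HP]. auto.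
Qed.

Lemma cont_from_eq_at (f g : R -> R) :
  cont_from t0 f -> cont_from t0 g -> (forall s, t0 < s -> f s = g s) -> f t0 = g t0.
Proof.
intros Hf Hg He.
apply (filterlim_locally_unique (F := at_right t0) f (f t0) (g t0)).
- apply cont_from_at_right, Hf.
- apply (filterlim_ext_loc g); [|apply cont_from_at_right, Hg].
  exists (mkposreal 1 Rlt_0_1). intros s _ Hs. symmetry. apply He, Hs.
Qed.

Lemma continuous_clamp (h : R -> R) (a b u : R) :
  cont_from t0 h -> t0 <= a -> continuous (fun u => h (Rmax a (Rmin b u))) u.
Proof.
intros Hh Ha.
apply (continuous_ext (fun u => h (Rmax t0 (Rmax a (Rmin b u))))).
- intros v. rewrite Rmax_right; auto. eapply Rle_trans; [exact Ha | apply Rmax_l].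
- apply (continuous_comp (fun u => Rmax a (Rmin b u)) (fun s => h (Rmax t0 s))).
  + apply (continuous_comp (fun u => Rmin b u) (fun s => Rmax a s));
      [apply continuous_Rmin_l | apply continuous_Rmax_l].
  + apply Hh. eapply Rle_trans; [exact Ha | apply Rmax_l].
Qed.

End ContFrom.

Ltac solve_cont_from :=
  repeat match goal with
  | H : cont_from ?t ?f |- cont_from ?t ?f => exact H
  | |- cont_from ?t (fun s => ?f s) => change (cont_from t f)
  | |- cont_from _ (fun _ => ?c) => apply cont_from_const
  | |- cont_from _ (fun s => s) => apply cont_from_id
  | |- cont_from _ (fun s => @?f s + @?g s) => apply (cont_from_plus _ f g)
  | |- cont_from _ (fun s => @?f s - @?g s) => apply (cont_from_minus _ f g)
  | |- cont_from _ (fun s => @?f s * @?g s) => apply (cont_from_mult _ f g)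
  | |- cont_from _ (fun s => - @?f s) => apply (cont_from_opp _ f)
  | |- cont_from _ (fun s => @?f s / @?g s) => apply (cont_from_div _ f g)
  | |- cont_from _ (fun s => / @?f s) => apply (cont_from_inv _ f)
  | H : forall s, ?t <= s -> ?g s <> 0 |- forall s, ?t <= s -> _ <> 0 =>
      cbv beta; exact H
  end.

(** * Integral equations with piecewise continuous input *)

Definition primitive_from (t0 : R) (F f : R -> R) : Prop :=
  forall t, t0 <= t -> ex_RInt f t0 t /\ F t = F t0 + RInt f t0 t.

Section Primitives.

Variable t0 : R.

Lemma ex_RInt_inside (f : R -> R) (a b u v : R) :
  ex_RInt f a b -> a <= u <= b -> a <= v <= b -> ex_RInt f u v.
Proof.
intros He Hu Hv.
assert (K : forall u v, a <= u <= b -> a <= v <= b -> u <= v -> ex_RInt f u v).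
{ intros u' v' Hu' Hv' Huv. apply (ex_RInt_Chasles_1 f u' v' b); [lra|].
  apply (ex_RInt_Chasles_2 f a u' b); [lra | exact He]. }
destruct (Rle_or_lt u v); [apply K; auto | apply ex_RInt_swap, K; auto; lra].
Qed.

Lemma primitive_lipschitz (F f : R -> R) (T : R) :
  primitive_from t0 F f -> t0 <= T ->
  exists M, 0 <= M /\ forall s u, t0 <= s <= T -> t0 <= u <= T ->
    Rabs (F s - F u) <= M * Rabs (s - u).
Proof.
intros HF HT.
destruct (HF T HT) as [Hex _].
destruct (ex_RInt_ub f t0 T Hex) as [M HM].
assert (HM' : forall v, t0 <= v <= T -> Rabs (f v) <= M).
{ intros v Hv. apply (HM v). rewrite Rmin_left, Rmax_right by lra. exact Hv. }
assert (Hu : forall s u, t0 <= u <= s -> s <= T -> Rabs (F s - F u) <= M * (s - u)).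
{ intros s u Hus HsT.
  destruct (HF s) as [Hs Es]; [lra|]. destruct (HF u) as [Hu' Eu]; [lra|].
  assert (Hi : ex_RInt f u s) by (apply (ex_RInt_inside f t0 T); auto; lra).
  replace (F s - F u) with (RInt f u s)
    by (pose proof (RInt_Chasles f t0 u s Hu' Hi) as E;
        change (plus ?a ?b) with (a + b) in E; lra).
  rewrite Rmult_comm. apply abs_RInt_le_const; auto; try lra.
  intros v Hv. apply HM'. lra. }
exists (Rabs M). split; [apply Rabs_pos|]. intros s u Hs Hu'.
assert (M <= Rabs M) by apply Rle_abs.
destruct (Rle_or_lt u s).
- rewrite (Rabs_right (s - u)) by lra. eapply Rle_trans; [apply Hu; lra|]. nra.
- rewrite Rabs_minus_sym, (Rabs_left (s - u)) by lra.
  eapply Rle_trans; [apply Hu; lra|]. nra.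
Qed.

Lemma cont_from_primitive (F f : R -> R) : primitive_from t0 F f -> cont_from t0 F.
Proof.
intros HF t Ht.
destruct (primitive_lipschitz F f (t + 1) HF ltac:(lra)) as [M [HM HL]].
apply filterlim_locally. intros eps.
assert (Hd : 0 < Rmin 1 (eps / (M + 1))).
{ apply Rmin_pos; [lra|]. apply Rdiv_lt_0_compat; [apply cond_pos | lra]. }
exists (mkposreal _ Hd). intros u Hu.
change (Rabs (F (Rmax t0 u) - F (Rmax t0 t)) < eps).
change (Rabs (u - t) < Rmin 1 (eps / (M + 1))) in Hu.
pose proof (Rmin_l 1 (eps / (M + 1))). pose proof (Rmin_r 1 (eps / (M + 1))).
pose proof (cond_pos eps).
assert (Hmu : Rabs (Rmax t0 u - t) <= Rabs (u - t)).
{ unfold Rmax. destruct (Rle_dec t0 u); [lra|]. rewrite !Rabs_left1; lra. }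
rewrite (Rmax_right t0 t) by lra.
assert (Hr : t0 <= Rmax t0 u <= t + 1).
{ split; [apply Rmax_l|]. apply Rabs_lt_between' in Hu.
  unfold Rmax. destruct (Rle_dec t0 u); lra. }
eapply Rle_lt_trans; [apply HL; lra|].
apply Rle_lt_trans with ((M + 1) * Rabs (u - t)); [pose proof (Rabs_pos (Rmax t0 u - t)); nra|].
apply Rlt_le_trans with ((M + 1) * (eps / (M + 1))); [apply Rmult_lt_compat_l; lra|].
right. field. lra.
Qed.

Lemma primitive_is_derive (F f : R -> R) (t : R) :
  primitive_from t0 F f -> t0 < t -> continuous f t -> is_derive F t (f t).
Proof.
intros HF Ht Hc.
assert (HI : is_derive (fun s => RInt f t0 s) t (f t)).
{ apply is_derive_RInt with (a := t0); auto.
  generalize (locally_gt t0 t Ht). apply filter_imp. intros s Hs.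
  apply RInt_correct. apply (HF s). lra. }
assert (HI' : is_derive (fun s => F t0 + RInt f t0 s) t (0 + f t))
  by (apply (is_derive_plus (fun _ => F t0)); [apply (is_derive_const (F t0)) | exact HI]).
rewrite Rplus_0_l in HI'. apply (is_derive_ext_loc (fun s => F t0 + RInt f t0 s)); [|exact HI'].
generalize (locally_gt t0 t Ht). apply filter_imp. intros s Hs. symmetry. apply HF. lra.
Qed.

Lemma primitive_is_derive_cont_from (F f : R -> R) (t : R) :
  primitive_from t0 F f -> cont_from t0 f -> t0 < t -> is_derive F t (f t).
Proof.
intros HF Hf Ht. apply (primitive_is_derive F f t HF Ht).
apply (continuous_of_cont_from t0); auto.
Qed.

Lemma primitive_ext (F f g : R -> R) :
  (forall s, t0 <= s -> f s = g s) -> primitive_from t0 F f -> primitive_from t0 F g.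
Proof.
intros He HF t Ht. destruct (HF t Ht) as [H1 H2].
assert (He' : forall s, Rmin t0 t < s < Rmax t0 t -> f s = g s).
{ intros s Hs. rewrite Rmin_left in Hs by lra. apply He. lra. }
split; [apply (ex_RInt_ext f); auto|]. rewrite H2, (RInt_ext f g); auto.
Qed.

End Primitives.

Lemma RInt_of_is_derive_interior (F G g : R -> R) (a b : R) :
  a < b -> (forall u, continuous g u) ->
  continuous G a -> continuous G b -> (forall u, a <= u <= b -> G u = F u) ->
  (forall u, a < u < b -> is_derive F u (g u)) -> F b - F a = RInt g a b.
Proof.
intros Hab Hg HGa HGb HGF HF.
assert (HI : forall u, is_derive (fun v => RInt g a v) u (g u)).
{ intros u. apply is_derive_RInt with (a := a); auto.
  apply filter_forall. intros v.
  apply RInt_correct, (@ex_RInt_continuous R_CompleteNormedModule). auto. }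
assert (HG : forall u, a < u < b -> is_derive G u (g u)).
{ intros u Hu. apply (is_derive_ext_loc F); [|apply HF; auto].
  generalize (filter_and _ _ (locally_gt a u (proj1 Hu)) (locally_lt b u (proj2 Hu))).
  apply filter_imp. intros v Hv. symmetry. apply HGF. lra. }
destruct (MVT_gen (fun v => G v - RInt g a v) a b (fun _ => 0)) as [c [_ Hc]].
- rewrite Rmin_left, Rmax_right by lra. intros u Hu.
  replace 0 with (g u - g u) by ring. apply (is_derive_minus G); auto.
- rewrite Rmin_left, Rmax_right by lra. intros u Hu.
  apply continuity_pt_filterlim, (continuous_minus G).
  + destruct (Rle_lt_or_eq_dec _ _ (proj1 Hu)) as [H1|<-]; [|auto].
    destruct (Rle_lt_or_eq_dec _ _ (proj2 Hu)) as [H2 | ->]; [|auto].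
    apply (@ex_derive_continuous R_AbsRing R_NormedModule). exists (g u). apply HG; auto.
  + apply (@ex_derive_continuous R_AbsRing R_NormedModule). exists (g u). auto.
- rewrite !HGF in Hc by lra. rewrite RInt_point in Hc. change zero with 0 in Hc. lra.
Qed.

Section PiecewiseFTC.

Variable t0 : R.

Lemma primitive_is_derive_forced (F f x h k : R -> R) (u : R) :
  primitive_from t0 F f -> cont_from t0 h -> cont_from t0 k ->
  (forall s, t0 <= s -> f s = x s * h s + k s) -> t0 < u -> continuous x u ->
  is_derive F u (f u).
Proof.
intros HF Hh Hk Hf Hu Hx. apply (primitive_is_derive t0 F f u HF Hu).
apply (continuous_ext_loc _ (fun s => x s * h s + k s)).
- generalize (locally_gt t0 u Hu). apply filter_imp. intros s Hs. symmetry. apply Hf. lra.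
- apply (continuous_plus (fun s => x s * h s) k).
  + apply (continuous_mult x h); auto. apply (continuous_of_cont_from t0); auto.
  + apply (continuous_of_cont_from t0); auto.
Qed.

(* On a piece of continuity of [x], [f] agrees with a continuous function built
   from a continuous extension of [x]; the fundamental theorem of calculus
   applies to the latter. *)
Lemma primitive_pwc_piece (F f x h k : R -> R) (a b : R) :
  t0 <= a < b -> cont_from t0 F -> cont_from t0 h -> cont_from t0 k ->
  (forall u, t0 <= u -> f u = x u * h u + k u) ->
  (forall u, t0 < u -> continuous x u -> is_derive F u (f u)) ->
  (forall u, a < u < b -> continuous x u) ->
  (exists l, filterlim x (at_right a) (locally l)) ->
  (exists l, filterlim x (at_left b) (locally l)) ->
  ex_RInt f a b /\ F b - F a = RInt f a b.
Proof.
intros Hab HF Hh Hk Hf HD Hc [l1 Hl1] [l2 Hl2].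
destruct (C0_extension_lt x l1 l2 a b (proj2 Hab) Hc Hl1 Hl2) as [gx [Hgx1 [Hgx2 _]]].
set (clamp u := Rmax a (Rmin b u)).
set (g u := gx u * h (clamp u) + k (clamp u)).
assert (Hg : forall u, continuous g u).
{ intros u. apply (continuous_plus (fun u => gx u * h (clamp u))).
  - apply (continuous_mult gx); [apply Hgx1|]. apply (continuous_clamp t0); lra || auto.
  - apply (continuous_clamp t0); lra || auto. }
assert (Hfg : forall u, a < u < b -> f u = g u).
{ intros u Hu. unfold g, clamp. rewrite Hgx2 by auto.
  rewrite Rmin_right, Rmax_right by lra. apply Hf. lra. }
assert (Hgf : forall u, Rmin a b < u < Rmax a b -> g u = f u).
{ rewrite Rmin_left, Rmax_right by lra. intros u Hu. symmetry. apply Hfg, Hu. }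
split.
- apply (ex_RInt_ext g); [exact Hgf|]. apply (@ex_RInt_continuous R_CompleteNormedModule). auto.
- rewrite <- (RInt_ext g f) by exact Hgf.
  apply (RInt_of_is_derive_interior F (fun u => F (Rmax t0 u)));
    [lra | exact Hg | apply HF; lra | apply HF; lra | |].
  + intros u Hu. rewrite Rmax_right; lra.
  + intros u Hu. rewrite <- Hfg by auto. apply HD; [lra | apply Hc; auto].
Qed.

Lemma primitive_pwc (F f x h k : R -> R) :
  pwc t0 x -> cont_from t0 F -> cont_from t0 h -> cont_from t0 k ->
  (forall u, t0 <= u -> f u = x u * h u + k u) ->
  (forall u, t0 < u -> continuous x u -> is_derive F u (f u)) -> primitive_from t0 F f.
Proof.
intros Hx HF Hh Hk Hf HD t Ht.
assert (H0 : ex_RInt f t0 t0 /\ F t0 = F t0 + RInt f t0 t0)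
  by (split; [apply ex_RInt_point | rewrite RInt_point; change zero with 0; ring]).
destruct (Rle_lt_or_eq_dec _ _ Ht) as [Hlt | <-]; [|exact H0].
destruct (Hx t Hlt) as [n [s [Hs0 [<- Hpc]]]]. clear Ht Hlt.
induction n as [|i IH]; [rewrite Hs0; exact H0|].
destruct IH as [IH1 IH2]; [intros j Hj; apply Hpc; lia|].
assert (Hti : t0 <= s i).
{ clear -Hs0 Hpc. induction i as [|i IHi]; [rewrite Hs0; lra|].
  destruct (Hpc i) as [Hi _]; [lia|]. specialize (IHi ltac:(intros j Hj; apply Hpc; lia)). lra. }
destruct (Hpc i) as [Hlt' [Hc [Hl1 Hl2]]]; [lia|].
destruct (primitive_pwc_piece F f x h k (s i) (s (S i))) as [Hex Hpiece]; auto.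
split; [apply (ex_RInt_Chasles f t0 (s i)); auto|].
rewrite <- (RInt_Chasles f t0 (s i) (s (S i))) by auto.
change (plus ?a ?b) with (a + b). lra.
Qed.

Lemma pwc_cont_from (x : R -> R) : cont_from t0 x -> pwc t0 x.
Proof.
intros Hx T HT. exists 1%nat, (fun i => match i with O => t0 | _ => T end).
do 2 (split; [reflexivity|]).
intros i Hi. assert (i = O) by lia. subst i. simpl.
split; [lra|]. split; [intros u Hu; apply (continuous_of_cont_from t0); auto; lra|]. split.
- exists (x t0). apply cont_from_at_right, Hx.
- exists (x T). eapply filterlim_filter_le_1; [|apply (continuous_of_cont_from t0); auto].
  intros P HP. unfold at_left, within. eapply filter_imp; [|exact HP]. auto.
Qed.

Lemma primitive_cont_from (F f : R -> R) :
  cont_from t0 F -> cont_from t0 f ->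
  (forall u, t0 < u -> is_derive F u (f u)) -> primitive_from t0 F f.
Proof.
intros HF Hf HD.
apply (primitive_pwc F f (fun _ => 0) (fun _ => 0) f); auto using cont_from_const.
- apply pwc_cont_from, cont_from_const.
- intros; ring.
Qed.

End PiecewiseFTC.

Lemma sol1_iff (t0 : R) (a1 a0 x : R -> R) (y0 : R) (y : R -> R) :
  sol1 t0 a1 a0 x y0 y <->
  y t0 = y0 /\ primitive_from t0 y (fun s => (x s - a0 s * y s) / a1 s).
Proof.
unfold sol1, primitive_from.
split; intros [H1 H2]; split; auto; intros t Ht; destruct (H2 t Ht); split; auto.
- rewrite H1; auto.
- rewrite <- H1; auto.
Qed.

Lemma sol2_iff (t0 : R) (b2 b1 b0 x : R -> R) (y0 y1 : R) (y : R -> R) :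
  sol2 t0 b2 b1 b0 x y0 y1 y <->
  exists z, y t0 = y0 /\ z t0 = y1 /\ primitive_from t0 y z /\
    primitive_from t0 z (fun s => (x s - b1 s * z s - b0 s * y s) / b2 s).
Proof.
unfold sol2, primitive_from. split.
- intros [z [H1 [H2 H3]]]. exists z. do 2 (split; auto). split.
  + intros t Ht. destruct (H3 t Ht) as [A [B _]]. rewrite H1; auto.
  + intros t Ht. destruct (H3 t Ht) as [_ [_ [C D]]]. rewrite H2; auto.
- intros [z [H1 [H2 [H3 H4]]]]. exists z. do 2 (split; auto).
  intros t Ht. destruct (H3 t Ht) as [A B]. destruct (H4 t Ht) as [C D].
  rewrite <- H1, <- H2. auto.
Qed.

Lemma sol3_iff (t0 : R) (c3 c2 c1 c0 x : R -> R) (y0 y1 y2 : R) (y : R -> R) :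
  sol3 t0 c3 c2 c1 c0 x y0 y1 y2 y <->
  exists z1 z2, y t0 = y0 /\ z1 t0 = y1 /\ z2 t0 = y2 /\
    primitive_from t0 y z1 /\ primitive_from t0 z1 z2 /\
    primitive_from t0 z2 (fun s => (x s - c2 s * z2 s - c1 s * z1 s - c0 s * y s) / c3 s).
Proof.
unfold sol3, primitive_from. split.
- intros [z1 [z2 [H1 [H2 [H3 H4]]]]]. exists z1, z2. do 3 (split; auto). split; [|split].
  + intros t Ht. destruct (H4 t Ht) as [A [B _]]. rewrite H1; auto.
  + intros t Ht. destruct (H4 t Ht) as [_ [_ [C [D _]]]]. rewrite H2; auto.
  + intros t Ht. destruct (H4 t Ht) as [_ [_ [_ [_ [E G]]]]]. rewrite H3; auto.
- intros [z1 [z2 [H1 [H2 [H3 [H4 [H5 H6]]]]]]]. exists z1, z2. do 3 (split; auto).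
  intros t Ht. destruct (H4 t Ht) as [A B]. destruct (H5 t Ht) as [C D].
  destruct (H6 t Ht) as [E G]. rewrite <- H1, <- H2, <- H3. repeat split; auto.
Qed.

(** * Cube roots *)

Lemma pow3_inj (a b : R) : a ^ 3 = b ^ 3 -> a = b.
Proof.
intros H.
assert (Hf : (a - b) * ((2 * a + b) ^ 2 + 3 * b ^ 2) = 0)
  by (replace ((a - b) * ((2 * a + b) ^ 2 + 3 * b ^ 2)) with (4 * (a ^ 3 - b ^ 3)) by ring; lra).
apply Rmult_integral in Hf. destruct Hf as [Hf|Hf]; [lra|].
pose proof (pow2_ge_0 (2 * a + b)). pose proof (pow2_ge_0 b).
assert (Hb : b * b = 0) by (simpl in *; lra).
apply Rmult_integral in Hb. destruct Hb as [-> | ->]; simpl in *; nra.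
Qed.

Lemma Rpower_third_cube (x : R) : 0 < x -> Rpower x (1/3) ^ 3 = x.
Proof.
intros Hx. rewrite <- Rpower_pow by (unfold Rpower; apply exp_pos).
rewrite Rpower_mult. replace (1 / 3 * INR 3) with 1 by (simpl; field). apply Rpower_1; auto.
Qed.

Lemma cbrt_cube (x : R) : cbrt x ^ 3 = x.
Proof.
unfold cbrt. destruct (Rlt_dec 0 x); [apply Rpower_third_cube; auto|].
destruct (Rlt_dec x 0); [|simpl; lra].
replace ((- Rpower (- x) (1 / 3)) ^ 3) with (- (Rpower (- x) (1 / 3) ^ 3)) by ring.
rewrite Rpower_third_cube by lra. ring.
Qed.

Lemma cube_cbrt (a : R) : cbrt (a ^ 3) = a.
Proof. apply pow3_inj, cbrt_cube. Qed.

Lemma cbrt_mult (x y : R) : cbrt (x * y) = cbrt x * cbrt y.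
Proof. apply pow3_inj. rewrite Rpow_mult_distr, !cbrt_cube. reflexivity. Qed.

Lemma cbrt_neq0 (x : R) : x <> 0 -> cbrt x <> 0.
Proof. intros H E. apply H. rewrite <- (cbrt_cube x), E. ring. Qed.

Lemma cbrt_inv (x : R) : cbrt (/ x) = / cbrt x.
Proof.
destruct (Req_dec x 0) as [->|Hx].
- rewrite Rinv_0. apply pow3_inj. rewrite cbrt_cube, pow_inv, cbrt_cube, Rinv_0. reflexivity.
- apply pow3_inj. rewrite pow_inv, !cbrt_cube. reflexivity.
Qed.

Lemma ex_derive_cbrt (x : R) : x <> 0 -> ex_derive cbrt x.
Proof.
intros Hx. destruct (Rlt_or_le 0 x) as [Hp|Hn].
- apply (ex_derive_ext_loc (fun y => exp (1/3 * ln y))); [|auto_derive; lra].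
  generalize (locally_gt 0 x Hp). apply filter_imp. intros y Hy.
  unfold cbrt. destruct (Rlt_dec 0 y); [reflexivity | lra].
- apply (ex_derive_ext_loc (fun y => - exp (1/3 * ln (- y)))); [|auto_derive; lra].
  generalize (locally_lt 0 x ltac:(lra)). apply filter_imp. intros y Hy.
  unfold cbrt. destruct (Rlt_dec 0 y); [lra|]. destruct (Rlt_dec y 0); [reflexivity | lra].
Qed.

(** * Commuting pairs *)

(* The coefficients of the second-order systems commuting with [a1 y' + a0 y]. *)
Definition comm_b2 (e2 : R) (a1 : R -> R) (t : R) : R := e2 * a1 t ^ 2.
Definition comm_b1 (e2 e1 : R) (a1 a0 : R -> R) (t : R) : R :=
  e2 * (Derive a1 t + 2 * a0 t) * a1 t + e1 * a1 t.
Definition comm_b0 (e2 e1 e0 : R) (a1 a0 : R -> R) (t : R) : R :=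
  e2 * (Derive a0 t * a1 t + a0 t ^ 2) + e1 * a0 t + e0.

Section CommPartner.

Variables (e2 e1 e0 : R) (a1 a0 : R -> R).

Local Notation b2 := (comm_b2 e2 a1).
Local Notation b1 := (comm_b1 e2 e1 a1 a0).
Local Notation b0 := (comm_b0 e2 e1 e0 a1 a0).

Lemma Derive_comm_b2 (t : R) :
  ex_derive a1 t -> Derive b2 t = 2 * e2 * a1 t * Derive a1 t.
Proof. intros H1. apply is_derive_unique. unfold comm_b2. auto_derive; auto. eta_Derive. ring. Qed.

Lemma Derive_comm_b1 (t : R) :
  ex_derive a1 t -> ex_derive (Derive a1) t -> ex_derive a0 t ->
  Derive b1 t = e2 * (Derive (Derive a1) t + 2 * Derive a0 t) * a1 t
                + e2 * (Derive a1 t + 2 * a0 t) * Derive a1 t + e1 * Derive a1 t.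
Proof.
intros H1 H1' H0. apply is_derive_unique. unfold comm_b1.
auto_derive; repeat split; auto. eta_Derive. ring.
Qed.

Lemma Derive_comm_b0 (t : R) :
  ex_derive a1 t -> ex_derive a0 t -> ex_derive (Derive a0) t ->
  Derive b0 t = e2 * (Derive (Derive a0) t * a1 t + Derive a0 t * Derive a1 t
                      + 2 * a0 t * Derive a0 t) + e1 * Derive a0 t.
Proof.
intros H1 H0 H0'. apply is_derive_unique. unfold comm_b0.
auto_derive; repeat split; auto. eta_Derive. ring.
Qed.

Lemma comm_b_commute (t : R) :
  ex_derive a1 t -> ex_derive (Derive a1) t -> ex_derive a0 t -> ex_derive (Derive a0) t ->
  AB2 a1 a0 b2 b1 b0 t = BA2 a1 a0 b2 b1 b0 t /\
  AB1 a1 a0 b2 b1 b0 t = BA1 a1 a0 b2 b1 b0 t /\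
  AB0 a1 a0 b2 b1 b0 t = BA0 a1 a0 b2 b1 b0 t.
Proof.
intros H1 H1' H0 H0'.
unfold AB2, AB1, AB0, BA2, BA1, BA0.
rewrite Derive_comm_b2, Derive_comm_b1, Derive_comm_b0 by auto.
unfold comm_b2, comm_b1, comm_b0. repeat split; ring.
Qed.

Lemma diff1_from_comm_b (t0 : R) :
  diff2_from t0 a1 -> diff2_from t0 a0 ->
  diff1_from t0 b2 /\ diff1_from t0 b1 /\ diff1_from t0 b0.
Proof.
intros H1 H0. unfold comm_b2, comm_b1, comm_b0.
repeat split; intros t Ht; destruct (H1 t Ht), (H0 t Ht); auto_derive; repeat split; auto.
Qed.

End CommPartner.

Lemma comm_b_ext_from (t0 e2 e1 e0 : R) (a1 a0 a1' a0' : R -> R) :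
  (forall s, t0 <= s -> a1 s = a1' s) -> (forall s, t0 <= s -> a0 s = a0' s) ->
  forall t, t0 <= t ->
    comm_b2 e2 a1 t = comm_b2 e2 a1' t /\
    comm_b1 e2 e1 a1 a0 t = comm_b1 e2 e1 a1' a0' t /\
    comm_b0 e2 e1 e0 a1 a0 t = comm_b0 e2 e1 e0 a1' a0' t.
Proof.
intros H1 H0 t Ht. unfold comm_b2, comm_b1, comm_b0.
rewrite (Derive_ext_from a1 a1'), (Derive_ext_from a0 a0'), H1, H0
  by (auto; intros; apply H1 || apply H0; lra).
auto.
Qed.

Section CommutingPair.

Variables (t0 : R) (a1 a0 b2 b1 b0 : R -> R).
Hypotheses (Ha1 : diff2_from t0 a1) (Ha0 : diff2_from t0 a0)
  (Hb2 : diff1_from t0 b2) (Hb1 : diff1_from t0 b1) (Hb0 : diff1_from t0 b0)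
  (Ha1nz : forall t, t0 <= t -> a1 t <> 0) (Hb2nz : forall t, t0 <= t -> b2 t <> 0)
  (Hcomm : forall t, t0 <= t ->
     AB2 a1 a0 b2 b1 b0 t = BA2 a1 a0 b2 b1 b0 t /\
     AB1 a1 a0 b2 b1 b0 t = BA1 a1 a0 b2 b1 b0 t /\
     AB0 a1 a0 b2 b1 b0 t = BA0 a1 a0 b2 b1 b0 t).

(* Each of the three equations [ABi = BAi] says that one combination of the
   coefficients of [B] has derivative zero. *)
Lemma commuting_b2 : forall t, t0 <= t -> b2 t = comm_b2 (b2 t0 / a1 t0 ^ 2) a1 t.
Proof.
assert (Hd : forall u, t0 <= u -> is_derive (fun s => b2 s / a1 s ^ 2) u 0).
{ intros u Hu. destruct (Hcomm u Hu) as [E _]. unfold AB2, BA2 in E.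
  pose proof (Ha1nz u Hu). destruct (Ha1 u Hu). pose proof (Hb2 u Hu).
  auto_derive; repeat split; auto. eta_Derive.
  assert (Hk : a1 u * Derive b2 u = 2 * b2 u * Derive a1 u) by lra.
  replace (Derive b2 u) with (2 * b2 u * Derive a1 u / a1 u) by (rewrite <- Hk; field; auto).
  field. auto. }
intros t Ht. pose proof (zero_derivative_const_from t0 _ Hd t Ht) as E. cbv beta in E.
unfold comm_b2. rewrite <- E. field. auto.
Qed.

Lemma commuting_b1 (e2 : R) :
  (forall s, t0 <= s -> b2 s = comm_b2 e2 a1 s) -> forall t, t0 <= t ->
  b1 t = comm_b1 e2 (b1 t0 / a1 t0 - e2 * (Derive a1 t0 + 2 * a0 t0)) a1 a0 t.
Proof.
intros He2.
assert (Hd : forall u, t0 <= u ->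
          is_derive (fun s => b1 s / a1 s - e2 * (Derive a1 s + 2 * a0 s)) u 0).
{ intros u Hu. destruct (Hcomm u Hu) as [_ [E _]]. unfold AB1, BA1 in E.
  pose proof (Ha1nz u Hu). destruct (Ha1 u Hu), (Ha0 u Hu). pose proof (Hb1 u Hu).
  auto_derive; repeat split; auto. eta_Derive.
  assert (Hk : a1 u * Derive b1 u
               = b2 u * (Derive (Derive a1) u + 2 * Derive a0 u) + b1 u * Derive a1 u) by lra.
  replace (Derive b1 u)
    with ((b2 u * (Derive (Derive a1) u + 2 * Derive a0 u) + b1 u * Derive a1 u) / a1 u)
    by (rewrite <- Hk; field; auto).
  rewrite He2 by auto. unfold comm_b2. field. auto. }
intros t Ht. pose proof (zero_derivative_const_from t0 _ Hd t Ht) as E. cbv beta in E.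
unfold comm_b1. rewrite <- E. field. auto.
Qed.

Lemma commuting_b0 (e2 e1 : R) :
  (forall s, t0 <= s -> b2 s = comm_b2 e2 a1 s) ->
  (forall s, t0 <= s -> b1 s = comm_b1 e2 e1 a1 a0 s) -> forall t, t0 <= t ->
  b0 t = comm_b0 e2 e1 (b0 t0 - e2 * (Derive a0 t0 * a1 t0 + a0 t0 ^ 2) - e1 * a0 t0) a1 a0 t.
Proof.
intros He2 He1.
assert (Hd : forall u, t0 <= u ->
          is_derive (fun s => b0 s - e2 * (Derive a0 s * a1 s + a0 s ^ 2) - e1 * a0 s) u 0).
{ intros u Hu. destruct (Hcomm u Hu) as [_ [_ E]]. unfold AB0, BA0 in E.
  pose proof (Ha1nz u Hu). destruct (Ha1 u Hu), (Ha0 u Hu). pose proof (Hb0 u Hu).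
  auto_derive; repeat split; auto. eta_Derive.
  assert (Hk : a1 u * Derive b0 u = b2 u * Derive (Derive a0) u + b1 u * Derive a0 u) by lra.
  replace (Derive b0 u) with ((b2 u * Derive (Derive a0) u + b1 u * Derive a0 u) / a1 u)
    by (rewrite <- Hk; field; auto).
  rewrite He2, He1 by auto. unfold comm_b2, comm_b1. field. auto. }
intros t Ht. pose proof (zero_derivative_const_from t0 _ Hd t Ht) as E. cbv beta in E.
unfold comm_b0. rewrite <- E. ring.
Qed.

Lemma commuting_comm_form :
  exists e2 e1 e0, e2 <> 0 /\ forall t, t0 <= t ->
    b2 t = comm_b2 e2 a1 t /\ b1 t = comm_b1 e2 e1 a1 a0 t /\
    b0 t = comm_b0 e2 e1 e0 a1 a0 t.
Proof.
set (e2 := b2 t0 / a1 t0 ^ 2).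
set (e1 := b1 t0 / a1 t0 - e2 * (Derive a1 t0 + 2 * a0 t0)).
set (e0 := b0 t0 - e2 * (Derive a0 t0 * a1 t0 + a0 t0 ^ 2) - e1 * a0 t0).
pose proof commuting_b2 as He2. pose proof (commuting_b1 e2 He2) as He1.
pose proof (commuting_b0 e2 e1 He2 He1) as He0.
exists e2, e1, e0. split; [|auto].
pose proof (Ha1nz t0 (Rle_refl t0)). pose proof (Hb2nz t0 (Rle_refl t0)).
unfold e2, Rdiv. neq0.
Qed.

End CommutingPair.

(** * The decomposition of C *)

Lemma a1f_a0f_of_comm_form (t0 e2 e1 : R) (c3 c2 a1 a0 b2 b1 b0 : R -> R) :
  e2 <> 0 -> diff1_from t0 a1 -> (forall t, t0 <= t -> a1 t <> 0) ->
  (forall t, t0 <= t -> b2 t = comm_b2 e2 a1 t) ->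
  (forall t, t0 <= t -> b1 t = comm_b1 e2 e1 a1 a0 t) ->
  (forall t, t0 <= t -> c3 t = AB3 a1 a0 b2 b1 b0 t) ->
  (forall t, t0 <= t -> c2 t = BA2 a1 a0 b2 b1 b0 t) ->
  forall t, t0 <= t -> a1 t = a1f e2 c3 t /\ a0 t = a0f e2 e1 c3 c2 t.
Proof.
intros He2 Ha1 Ha1nz Hb2 Hb1 Hc3 Hc2.
assert (Hc3a : forall s, t0 <= s -> c3 s = e2 * a1 s ^ 3).
{ intros s Hs. rewrite Hc3 by auto. unfold AB3. rewrite Hb2 by auto. unfold comm_b2. ring. }
intros t Ht. split.
- unfold a1f. rewrite Hc3a by auto.
  replace (e2 * a1 t ^ 3 / e2) with (a1 t ^ 3) by (field; auto). symmetry. apply cube_cbrt.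
- assert (HDc3 : Derive c3 t = 3 * e2 * a1 t ^ 2 * Derive a1 t).
  { rewrite (Derive_ext_from c3 (fun s => e2 * a1 s ^ 3)) by (intros; apply Hc3a; lra).
    apply is_derive_unique. pose proof (Ha1 t Ht). auto_derive; auto. eta_Derive. ring. }
  assert (Hq : cbrt (c3 t) = cbrt e2 * a1 t) by (rewrite Hc3a, cbrt_mult, cube_cbrt; auto).
  pose proof (Ha1nz t Ht).
  unfold a0f. rewrite Hq, HDc3, Hc2 by auto. unfold BA2. rewrite Hb2, Hb1 by auto.
  replace (3 * cbrt e2 * (cbrt e2 * a1 t) ^ 2) with (3 * cbrt e2 ^ 3 * a1 t ^ 2) by ring.
  rewrite cbrt_cube. unfold comm_b2, comm_b1. field. auto.
Qed.

Lemma coeff_cond_of_decomposed (t0 : R) (c3 c2 c1 c0 a1 a0 b2 b1 b0 : R -> R) :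
  diff2_from t0 a1 -> diff2_from t0 a0 ->
  diff1_from t0 b2 -> diff1_from t0 b1 -> diff1_from t0 b0 ->
  (forall t, t0 <= t -> a1 t <> 0) -> (forall t, t0 <= t -> b2 t <> 0) ->
  decomposed_eq t0 c3 c2 c1 c0 a1 a0 b2 b1 b0 ->
  exists e2 e1 e0 : R, e2 <> 0 /\ coeff_cond t0 c3 c2 c1 c0 e2 e1 e0.
Proof.
intros Ha1 Ha0 Hb2 Hb1 Hb0 Ha1nz Hb2nz Hdec.
destruct (commuting_comm_form t0 a1 a0 b2 b1 b0) as [e2 [e1 [e0 [He2 Hb]]]]; auto.
{ intros t Ht. destruct (Hdec t Ht) as [[_ [H2 [H1 H0]]] [_ [K2 [K1 K0]]]].
  rewrite H2, H1, H0, K2, K1, K0. auto. }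
assert (Ha : forall t, t0 <= t -> a1 t = a1f e2 c3 t /\ a0 t = a0f e2 e1 c3 c2 t).
{ apply (a1f_a0f_of_comm_form t0 e2 e1 c3 c2 a1 a0 b2 b1 b0); auto.
  - intros t Ht. apply Ha1; auto.
  - intros t Ht. apply Hb; auto.
  - intros t Ht. apply Hb; auto.
  - intros t Ht. symmetry. apply Hdec; auto.
  - intros t Ht. symmetry. apply Hdec; auto. }
assert (Hbf : forall t, t0 <= t ->
          b1f e2 e1 c3 c2 t = b1 t /\ b0f e2 e1 e0 c3 c2 t = b0 t).
{ intros t Ht.
  destruct (comm_b_ext_from t0 e2 e1 e0 a1 a0 (a1f e2 c3) (a0f e2 e1 c3 c2))
    with (t := t) as [_ [E1 E0]]; auto; try (intros s Hs; apply Ha; auto).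
  destruct (Hb t Ht) as [_ [F1 F0]].
  split; [rewrite F1, E1 | rewrite F0, E0]; reflexivity. }
exists e2, e1, e0. split; [exact He2|]. intros t Ht.
rewrite (Derive_ext_from (b1f e2 e1 c3 c2) b1), (Derive_ext_from (b0f e2 e1 e0 c3 c2) b0)
  by (intros; apply Hbf; lra).
destruct (Ha t Ht) as [<- <-]. destruct (Hbf t Ht) as [-> ->].
destruct (Hdec t Ht) as [[_ [_ [H1 H0]]] _]. unfold AB1, AB0 in H1, H0.
split; [rewrite <- H1 | rewrite <- H0]; ring.
Qed.

(* [y' / y] for the solutions of [a1 y' + a0 y = y]. *)
Definition fixed_logderiv (a1 a0 : R -> R) (s : R) : R := (1 - a0 s) / a1 s.

Section Construction.

Variables (t0 e2 e1 e0 : R) (c3 c2 c1 c0 : R -> R).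
Hypotheses (Hc3s : smooth_from t0 c3) (Hc2s : smooth_from t0 c2)
  (Hc3 : forall t, t0 <= t -> c3 t <> 0) (He2 : e2 <> 0).

Local Notation a1 := (a1f e2 c3).
Local Notation a0 := (a0f e2 e1 c3 c2).

Let Hc3d (t : R) (Ht : t0 <= t) : ex_derive c3 t := Hc3s 0%nat t Ht.
Let Hc3dd (t : R) (Ht : t0 <= t) : ex_derive (Derive c3) t := Hc3s 1%nat t Ht.
Let Hc3ddd (t : R) (Ht : t0 <= t) : ex_derive (Derive (Derive c3)) t := Hc3s 2%nat t Ht.
Let Hc2d (t : R) (Ht : t0 <= t) : ex_derive c2 t := Hc2s 0%nat t Ht.
Let Hc2dd (t : R) (Ht : t0 <= t) : ex_derive (Derive c2) t := Hc2s 1%nat t Ht.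

Definition a1f_deriv (s : R) : R := Derive c3 s / (3 * e2 * a1 s ^ 2).
Definition a0f_deriv (s : R) : R :=
  ((Derive c2 s - Derive (Derive c3) s) * a1 s - 2 * (c2 s - Derive c3 s) * a1f_deriv s)
  / (3 * e2 * a1 s ^ 3).

Lemma a1f_cube (s : R) : a1 s ^ 3 = c3 s / e2.
Proof. apply cbrt_cube. Qed.

Lemma a1f_neq0 (t : R) : t0 <= t -> a1 t <> 0.
Proof. intros Ht. pose proof (Hc3 t Ht). apply cbrt_neq0. unfold Rdiv. neq0. Qed.

Lemma a0f_eq (s : R) :
  a0 s = (c2 s - Derive c3 s) / (3 * e2 * a1 s ^ 2) - e1 / (3 * e2).
Proof.
assert (Hq : cbrt (c3 s) = cbrt e2 * a1 s).
{ unfold a1f. rewrite <- cbrt_mult. f_equal. field. auto. }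
unfold a0f. rewrite Hq.
replace (3 * cbrt e2 * (cbrt e2 * a1 s) ^ 2) with (3 * cbrt e2 ^ 3 * a1 s ^ 2) by ring.
rewrite cbrt_cube. reflexivity.
Qed.

Lemma is_derive_a1f (t : R) : t0 <= t -> is_derive a1 t (a1f_deriv t).
Proof.
intros Ht. pose proof (a1f_neq0 t Ht). pose proof (Hc3d t Ht).
assert (Hd : ex_derive a1 t).
{ apply (ex_derive_comp cbrt (fun s => c3 s / e2)).
  - apply ex_derive_cbrt. pose proof (Hc3 t Ht). unfold Rdiv. neq0.
  - auto_derive; auto. }
assert (H3 : is_derive (fun s => a1 s ^ 3) t (3 * a1 t ^ 2 * Derive a1 t))
  by (auto_derive; auto; eta_Derive; ring).
assert (Hc : is_derive (fun s => c3 s / e2) t (Derive c3 t / e2)).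
{ auto_derive; auto. eta_Derive. field. auto. }
assert (E : 3 * a1 t ^ 2 * Derive a1 t = Derive c3 t / e2).
{ transitivity (Derive (fun s => a1 s ^ 3) t); [symmetry; apply is_derive_unique, H3|].
  transitivity (Derive (fun s => c3 s / e2) t); [|apply is_derive_unique, Hc].
  apply Derive_ext. intros; apply a1f_cube. }
replace (a1f_deriv t) with (Derive a1 t).
- apply Derive_correct, Hd.
- unfold a1f_deriv. replace (Derive c3 t) with (3 * e2 * a1 t ^ 2 * Derive a1 t).
  + field. auto.
  + replace (3 * e2 * a1 t ^ 2 * Derive a1 t) with (e2 * (3 * a1 t ^ 2 * Derive a1 t)) by ring.
    rewrite E. field. auto.
Qed.

Lemma ex_derive_a1f (t : R) : t0 <= t -> ex_derive a1 t.
Proof. intros Ht. exists (a1f_deriv t). apply is_derive_a1f, Ht. Qed.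

Lemma ex_derive_a1f_deriv (t : R) : t0 <= t -> ex_derive a1f_deriv t.
Proof.
intros Ht. pose proof (a1f_neq0 t Ht). pose proof (Hc3dd t Ht). pose proof (ex_derive_a1f t Ht).
unfold a1f_deriv. auto_derive. repeat split; auto. neq0.
Qed.

Lemma is_derive_a0f (t : R) : t0 <= t -> is_derive a0 t (a0f_deriv t).
Proof.
intros Ht. pose proof (a1f_neq0 t Ht). pose proof (Hc3dd t Ht). pose proof (Hc2d t Ht).
pose proof (ex_derive_a1f t Ht).
apply (is_derive_ext (fun s => (c2 s - Derive c3 s) / (3 * e2 * a1 s ^ 2) - e1 / (3 * e2))).
{ intros s. symmetry. apply a0f_eq. }
auto_derive; [repeat split; auto; neq0|]. eta_Derive.
rewrite (is_derive_unique _ _ _ (is_derive_a1f t Ht)). unfold a0f_deriv. field. neq0.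
Qed.

Lemma ex_derive_a0f_deriv (t : R) : t0 <= t -> ex_derive a0f_deriv t.
Proof.
intros Ht. pose proof (a1f_neq0 t Ht). pose proof (Hc3ddd t Ht). pose proof (Hc2dd t Ht).
pose proof (Hc3dd t Ht). pose proof (Hc2d t Ht).
pose proof (ex_derive_a1f t Ht). pose proof (ex_derive_a1f_deriv t Ht).
unfold a0f_deriv. auto_derive. repeat split; auto; neq0.
Qed.

Definition a1_ext : R -> R := extend_left t0 a1 a1f_deriv.
Definition a0_ext : R -> R := extend_left t0 a0 a0f_deriv.

Local Notation b2_ext := (comm_b2 e2 a1_ext).
Local Notation b1_ext := (comm_b1 e2 e1 a1_ext a0_ext).
Local Notation b0_ext := (comm_b0 e2 e1 e0 a1_ext a0_ext).

Lemma diff2_from_a1_ext : diff2_from t0 a1_ext.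
Proof. apply diff2_from_extend_left; [apply is_derive_a1f | apply ex_derive_a1f_deriv]. Qed.

Lemma diff2_from_a0_ext : diff2_from t0 a0_ext.
Proof. apply diff2_from_extend_left; [apply is_derive_a0f | apply ex_derive_a0f_deriv]. Qed.

Lemma a1_ext_neq0 (t : R) : t0 <= t -> a1_ext t <> 0.
Proof. intros Ht. unfold a1_ext. rewrite extend_left_eq by auto. apply a1f_neq0, Ht. Qed.

Lemma Derive_a1_ext (t : R) : t0 <= t -> Derive a1_ext t = a1f_deriv t.
Proof.
intros Ht. rewrite (Derive_ext_from a1_ext a1) by (intros; apply extend_left_eq; lra).
apply is_derive_unique, is_derive_a1f, Ht.
Qed.

Lemma Pf_eq (t : R) : t0 <= t -> Pf e2 e1 c3 c2 t = fixed_logderiv a1_ext a0_ext t.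
Proof.
intros Ht. pose proof (a1f_neq0 t Ht) as Ha.
unfold Pf, fixed_logderiv, a1_ext, a0_ext. rewrite !extend_left_eq, a0f_eq by auto.
replace (e2 / c3 t) with (/ (c3 t / e2)) by (field; auto).
rewrite cbrt_inv. change (cbrt (c3 t / e2)) with (a1 t).
assert (Hc : c3 t = e2 * a1 t ^ 3) by (rewrite a1f_cube; field; auto).
set (a := a1 t) in *. rewrite Hc. field. auto.
Qed.

Lemma coefficients_ext_from (s : R) : t0 <= s ->
  a1 s = a1_ext s /\ a0 s = a0_ext s /\ b2f e2 c3 s = b2_ext s /\
  b1f e2 e1 c3 c2 s = b1_ext s /\ b0f e2 e1 e0 c3 c2 s = b0_ext s.
Proof.
intros Hs. unfold a1_ext, a0_ext. rewrite !extend_left_eq by auto.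
split; [reflexivity|]. split; [reflexivity|].
apply (comm_b_ext_from t0); auto; intros; symmetry; apply extend_left_eq; auto.
Qed.

Lemma decomposed_eq_of_coeff_cond :
  coeff_cond t0 c3 c2 c1 c0 e2 e1 e0 ->
  decomposed_eq t0 c3 c2 c1 c0 a1_ext a0_ext b2_ext b1_ext b0_ext.
Proof.
intros Hcc t Ht.
destruct (coefficients_ext_from t Ht) as [HA1 [HA0 _]].
assert (Hb : forall s, t0 <= s -> b1_ext s = b1f e2 e1 c3 c2 s /\ b0_ext s = b0f e2 e1 e0 c3 c2 s)
  by (intros s Hs; destruct (coefficients_ext_from s Hs) as [_ [_ [_ [-> ->]]]]; auto).
destruct (diff2_from_a1_ext t Ht), (diff2_from_a0_ext t Ht).
destruct (comm_b_commute e2 e1 e0 a1_ext a0_ext t) as [E2 [E1 E0]]; auto.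
assert (Hc3t : AB3 a1_ext a0_ext b2_ext b1_ext b0_ext t = c3 t).
{ unfold AB3, comm_b2. rewrite <- HA1.
  replace (a1 t * (e2 * a1 t ^ 2)) with (e2 * a1 t ^ 3) by ring.
  rewrite a1f_cube. field. auto. }
assert (Hc2t : BA2 a1_ext a0_ext b2_ext b1_ext b0_ext t = c2 t).
{ unfold BA2, comm_b2, comm_b1. rewrite Derive_a1_ext, <- HA1, <- HA0, a0f_eq by auto.
  unfold a1f_deriv. pose proof (a1f_neq0 t Ht). field. auto. }
assert (Hc1t : AB1 a1_ext a0_ext b2_ext b1_ext b0_ext t = c1 t).
{ unfold AB1. rewrite (Derive_ext_from _ (b1f e2 e1 c3 c2)) by (intros; apply Hb; lra).
  destruct (Hb t Ht) as [-> ->]. rewrite <- HA1, <- HA0, (proj1 (Hcc t Ht)). ring. }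
assert (Hc0t : AB0 a1_ext a0_ext b2_ext b1_ext b0_ext t = c0 t).
{ unfold AB0. rewrite (Derive_ext_from _ (b0f e2 e1 e0 c3 c2)) by (intros; apply Hb; lra).
  destruct (Hb t Ht) as [_ ->]. rewrite <- HA1, <- HA0, (proj2 (Hcc t Ht)). ring. }
unfold BA3. unfold AB3 in Hc3t. rewrite <- E1, <- E0, E2.
repeat split; auto. rewrite <- Hc3t. ring.
Qed.

Lemma comm_ext_decomposes :
  coeff_cond t0 c3 c2 c1 c0 e2 e1 e0 ->
  diff2_from t0 a1_ext /\ diff2_from t0 a0_ext /\
  diff1_from t0 b2_ext /\ diff1_from t0 b1_ext /\ diff1_from t0 b0_ext /\
  (forall t, t0 <= t -> a1_ext t <> 0) /\ (forall t, t0 <= t -> b2_ext t <> 0) /\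
  decomposed_eq t0 c3 c2 c1 c0 a1_ext a0_ext b2_ext b1_ext b0_ext.
Proof.
intros Hcc.
destruct (diff1_from_comm_b e2 e1 e0 a1_ext a0_ext t0 diff2_from_a1_ext diff2_from_a0_ext)
  as [Hb2 [Hb1 Hb0]].
do 5 (split; [assumption || apply diff2_from_a1_ext || apply diff2_from_a0_ext|]).
split; [exact a1_ext_neq0|]. split; [|apply decomposed_eq_of_coeff_cond, Hcc].
intros t Ht. unfold comm_b2. pose proof (a1_ext_neq0 t Ht). neq0.
Qed.

End Construction.

(** * Initial conditions *)

(* Initial values making the cascades AB, resp. BA, reproduce the initial
   values [y0, y1, y2] of C: in AB, [yB = y] and [yA = B y]; in BA,
   [yA = y] and [yB = A y]. *)
Definition AB_init (b2 b1 b0 : R -> R) (t0 y0 y1 y2 yA0 yB0 yB1 : R) : Prop :=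
  yB0 = y0 /\ yB1 = y1 /\ yA0 = b2 t0 * y2 + b1 t0 * y1 + b0 t0 * y0.
Definition BA_init (a1 a0 : R -> R) (t0 y0 y1 y2 yA0 yB0 yB1 : R) : Prop :=
  yA0 = y0 /\ yB0 = a1 t0 * y1 + a0 t0 * y0 /\
  yB1 = Derive a1 t0 * y1 + a1 t0 * y2 + Derive a0 t0 * y0 + a0 t0 * y1.

(* Test outputs: C produces [taylor2 t0 y0 y1 y2] for a suitable input, and a
   cascade producing it too must have the initial values [AB_init], [BA_init]. *)
Definition taylor2 (t0 y0 y1 y2 s : R) : R := y0 + y1 * (s - t0) + y2 * (s - t0) ^ 2 / 2.

Lemma is_derive_taylor2 (t0 y0 y1 y2 s : R) :
  is_derive (taylor2 t0 y0 y1 y2) s (y1 + y2 * (s - t0)).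
Proof. unfold taylor2. auto_derive; auto. lra. Qed.

Section Cascades.

Variables (t0 : R) (c3 c2 c1 c0 a1 a0 b2 b1 b0 : R -> R).
Hypotheses (Ha1 : diff2_from t0 a1) (Ha0 : diff2_from t0 a0)
  (Hb2 : diff1_from t0 b2) (Hb1 : diff1_from t0 b1) (Hb0 : diff1_from t0 b0)
  (Ha1nz : forall t, t0 <= t -> a1 t <> 0) (Hb2nz : forall t, t0 <= t -> b2 t <> 0)
  (Hdec : decomposed_eq t0 c3 c2 c1 c0 a1 a0 b2 b1 b0)
  (Cc3 : cont_from t0 c3) (Cc2 : cont_from t0 c2) (Cc1 : cont_from t0 c1)
  (Cc0 : cont_from t0 c0) (Hc3nz : forall t, t0 <= t -> c3 t <> 0).

Let Ca1 : cont_from t0 a1 := cont_from_ex_derive t0 a1 (fun t Ht => proj1 (Ha1 t Ht)).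
Let Ca0 : cont_from t0 a0 := cont_from_ex_derive t0 a0 (fun t Ht => proj1 (Ha0 t Ht)).
Let CDa1 : cont_from t0 (Derive a1) :=
  cont_from_ex_derive t0 _ (fun t Ht => proj2 (Ha1 t Ht)).
Let CDa0 : cont_from t0 (Derive a0) :=
  cont_from_ex_derive t0 _ (fun t Ht => proj2 (Ha0 t Ht)).
Let Cb2 : cont_from t0 b2 := cont_from_ex_derive t0 b2 Hb2.
Let Cb1 : cont_from t0 b1 := cont_from_ex_derive t0 b1 Hb1.
Let Cb0 : cont_from t0 b0 := cont_from_ex_derive t0 b0 Hb0.

Lemma outC_outAB (y0 y1 y2 yA0 yB0 yB1 : R) (x y : R -> R) :
  AB_init b2 b1 b0 t0 y0 y1 y2 yA0 yB0 yB1 -> pwc t0 x ->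
  outC t0 c3 c2 c1 c0 y0 y1 y2 x y -> outAB t0 a1 a0 b2 b1 b0 yA0 yB0 yB1 x y.
Proof.
intros [E0 [E1 E2]] Hx HC.
apply sol3_iff in HC. destruct HC as [z1 [z2 [Hy0 [Hz10 [Hz20 [I1 [I2 I3]]]]]]].
assert (Cy : cont_from t0 y) by (apply (cont_from_primitive t0 y z1); auto).
assert (Cz1 : cont_from t0 z1) by (apply (cont_from_primitive t0 z1 z2); auto).
assert (Cz2 : cont_from t0 z2) by (eapply cont_from_primitive; eauto).
exists (fun s => b2 s * z2 s + b1 s * z1 s + b0 s * y s). split.
- apply sol1_iff. split; [rewrite Hy0, Hz10, Hz20; lra|].
  apply (primitive_pwc t0 _ _ x (fun s => / a1 s)
           (fun s => - (a0 s * (b2 s * z2 s + b1 s * z1 s + b0 s * y s)) / a1 s));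
    try solve_cont_from; [exact Hx | |].
  + intros u Hu. field. auto.
  + intros u Hu Hxu. assert (Hu' : t0 <= u) by lra.
    assert (dz2 : is_derive z2 u ((x u - c2 u * z2 u - c1 u * z1 u - c0 u * y u) / c3 u)).
    { apply (primitive_is_derive_forced t0 z2 _ x (fun s => / c3 s)
               (fun s => - (c2 s * z2 s + c1 s * z1 s + c0 s * y s) / c3 s) u I3);
        try solve_cont_from; auto. intros s Hs. field. auto. }
    pose proof (primitive_is_derive_cont_from t0 z1 z2 u I2 Cz2 Hu) as dz1.
    pose proof (primitive_is_derive_cont_from t0 y z1 u I1 Cz1 Hu) as dy.
    destruct (Hdec u Hu') as [[H3 [H2 [H1 H0]]] _]. unfold AB3, AB2, AB1, AB0 in *.
    pose proof (Ha1nz u Hu'). pose proof (Hb2nz u Hu').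
    auto_derive; repeat split; try (eexists; eassumption); auto.
    eta_Derive. rewrite (is_derive_unique _ _ _ dz2), (is_derive_unique _ _ _ dz1),
      (is_derive_unique _ _ _ dy).
    rewrite <- H3, <- H2, <- H1, <- H0. field. auto.
- apply sol2_iff. exists z1. rewrite Hy0, Hz10. do 3 (split; auto).
  apply (primitive_ext t0 _ z2); auto. intros s Hs. field. auto.
Qed.

Lemma outAB_outC (y0 y1 y2 yA0 yB0 yB1 : R) (x y : R -> R) :
  AB_init b2 b1 b0 t0 y0 y1 y2 yA0 yB0 yB1 -> pwc t0 x ->
  outAB t0 a1 a0 b2 b1 b0 yA0 yB0 yB1 x y -> outC t0 c3 c2 c1 c0 y0 y1 y2 x y.
Proof.
intros [E0 [E1 E2]] Hx [yA [HA HB]].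
apply sol1_iff in HA. destruct HA as [HyA0 IA].
apply sol2_iff in HB. destruct HB as [z [Hy0 [Hz0 [Iy Iz]]]].
assert (CyA : cont_from t0 yA) by (eapply cont_from_primitive; eauto).
assert (Cy : cont_from t0 y) by (eapply cont_from_primitive; eauto).
assert (Cz : cont_from t0 z) by (eapply cont_from_primitive; eauto).
set (z2 s := (yA s - b1 s * z s - b0 s * y s) / b2 s).
assert (Cz2 : cont_from t0 z2) by (unfold z2; solve_cont_from).
apply sol3_iff. exists z, z2. rewrite Hy0, Hz0. do 2 (split; auto). split.
{ unfold z2. rewrite HyA0, Hz0, Hy0, E0, E1, E2. field. apply Hb2nz; lra. }
do 2 (split; auto).
apply (primitive_pwc t0 _ _ x (fun s => / c3 s)
         (fun s => - (c2 s * z2 s + c1 s * z s + c0 s * y s) / c3 s));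
  try solve_cont_from; [exact Hx | |].
- intros u Hu. field. auto.
- intros u Hu Hxu. assert (Hu' : t0 <= u) by lra.
  assert (dyA : is_derive yA u ((x u - a0 u * yA u) / a1 u)).
  { apply (primitive_is_derive_forced t0 yA _ x (fun s => / a1 s)
             (fun s => - (a0 s * yA s) / a1 s) u IA);
      try solve_cont_from; auto. intros s Hs. field. auto. }
  pose proof (primitive_is_derive_cont_from t0 z z2 u Iz Cz2 Hu) as dz.
  pose proof (primitive_is_derive_cont_from t0 y z u Iy Cz Hu) as dy.
  destruct (Hdec u Hu') as [[H3 [H2 [H1 H0]]] _]. unfold AB3, AB2, AB1, AB0 in *.
  pose proof (Ha1nz u Hu'). pose proof (Hb2nz u Hu').
  unfold z2 in *. auto_derive; repeat split; try (eexists; eassumption); auto.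
  eta_Derive. rewrite (is_derive_unique _ _ _ dyA), (is_derive_unique _ _ _ dz),
    (is_derive_unique _ _ _ dy).
  rewrite <- H3, <- H2, <- H1, <- H0. field. auto.
Qed.

Lemma outC_outBA (y0 y1 y2 yA0 yB0 yB1 : R) (x y : R -> R) :
  BA_init a1 a0 t0 y0 y1 y2 yA0 yB0 yB1 -> pwc t0 x ->
  outC t0 c3 c2 c1 c0 y0 y1 y2 x y -> outBA t0 a1 a0 b2 b1 b0 yA0 yB0 yB1 x y.
Proof.
intros [E0 [E1 E2]] Hx HC.
apply sol3_iff in HC. destruct HC as [z1 [z2 [Hy0 [Hz10 [Hz20 [I1 [I2 I3]]]]]]].
assert (Cy : cont_from t0 y) by (apply (cont_from_primitive t0 y z1); auto).
assert (Cz1 : cont_from t0 z1) by (apply (cont_from_primitive t0 z1 z2); auto).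
assert (Cz2 : cont_from t0 z2) by (eapply cont_from_primitive; eauto).
set (w s := Derive a1 s * z1 s + a1 s * z2 s + Derive a0 s * y s + a0 s * z1 s).
assert (Cw : cont_from t0 w) by (unfold w; solve_cont_from).
exists (fun s => a1 s * z1 s + a0 s * y s). split.
- apply sol2_iff. exists w. unfold w. rewrite Hy0, Hz10, Hz20. do 2 (split; auto). split.
  + apply (primitive_cont_from t0); [solve_cont_from | exact Cw |].
    intros u Hu. assert (Hu' : t0 <= u) by lra.
    pose proof (primitive_is_derive_cont_from t0 z1 z2 u I2 Cz2 Hu) as dz1.
    pose proof (primitive_is_derive_cont_from t0 y z1 u I1 Cz1 Hu) as dy.
    destruct (Ha1 u Hu'), (Ha0 u Hu').
    auto_derive; repeat split; try (eexists; eassumption); auto.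
    eta_Derive. rewrite (is_derive_unique _ _ _ dz1), (is_derive_unique _ _ _ dy). ring.
  + apply (primitive_pwc t0 _ _ x (fun s => / b2 s)
             (fun s => - (b1 s * w s + b0 s * (a1 s * z1 s + a0 s * y s)) / b2 s));
      try solve_cont_from; [exact Hx | |].
    * intros u Hu. unfold w. field. auto.
    * intros u Hu Hxu. assert (Hu' : t0 <= u) by lra.
      assert (dz2 : is_derive z2 u ((x u - c2 u * z2 u - c1 u * z1 u - c0 u * y u) / c3 u)).
      { apply (primitive_is_derive_forced t0 z2 _ x (fun s => / c3 s)
                 (fun s => - (c2 s * z2 s + c1 s * z1 s + c0 s * y s) / c3 s) u I3);
          try solve_cont_from; auto. intros s Hs. field. auto. }
      pose proof (primitive_is_derive_cont_from t0 z1 z2 u I2 Cz2 Hu) as dz1.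
      pose proof (primitive_is_derive_cont_from t0 y z1 u I1 Cz1 Hu) as dy.
      destruct (Ha1 u Hu'), (Ha0 u Hu').
      destruct (Hdec u Hu') as [_ [K3 [K2 [K1 K0]]]]. unfold BA3, BA2, BA1, BA0 in *.
      pose proof (Ha1nz u Hu'). pose proof (Hb2nz u Hu').
      unfold w. auto_derive; repeat split; try (eexists; eassumption); auto.
      eta_Derive. rewrite (is_derive_unique _ _ _ dz2), (is_derive_unique _ _ _ dz1),
        (is_derive_unique _ _ _ dy).
      rewrite <- K3, <- K2, <- K1, <- K0. field. auto.
- apply sol1_iff. rewrite Hy0. split; [symmetry; exact E0|].
  apply (primitive_ext t0 _ z1); auto. intros s Hs. field. auto.
Qed.

(* Differentiating [a1 y' + a0 y = yB] once. *)
Lemma is_derive_sol1_deriv (yB w y : R -> R) (u : R) :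
  primitive_from t0 y (fun s => (yB s - a0 s * y s) / a1 s) -> primitive_from t0 yB w ->
  cont_from t0 w -> t0 < u ->
  is_derive (fun s => (yB s - a0 s * y s) / a1 s) u
    ((w u - Derive a0 u * y u - (a0 u + Derive a1 u) * ((yB u - a0 u * y u) / a1 u)) / a1 u).
Proof.
intros Iy IyB Cw Hu. assert (Hu' : t0 <= u) by lra. pose proof (Ha1nz u Hu').
destruct (Ha1 u Hu'), (Ha0 u Hu').
assert (CyB : cont_from t0 yB) by (eapply cont_from_primitive; eauto).
assert (Cy : cont_from t0 y) by (eapply cont_from_primitive; eauto).
assert (dy : is_derive y u ((yB u - a0 u * y u) / a1 u))
  by (apply (primitive_is_derive_cont_from t0 y _ u Iy); [solve_cont_from | exact Hu]).
pose proof (primitive_is_derive_cont_from t0 yB w u IyB Cw Hu) as dyB.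
auto_derive; repeat split; try (eexists; eassumption); auto.
eta_Derive. rewrite (is_derive_unique _ _ _ dy), (is_derive_unique _ _ _ dyB). field. auto.
Qed.

Lemma outBA_outC (y0 y1 y2 yA0 yB0 yB1 : R) (x y : R -> R) :
  BA_init a1 a0 t0 y0 y1 y2 yA0 yB0 yB1 -> pwc t0 x ->
  outBA t0 a1 a0 b2 b1 b0 yA0 yB0 yB1 x y -> outC t0 c3 c2 c1 c0 y0 y1 y2 x y.
Proof.
intros [E0 [E1 E2]] Hx [yB [HB HA]].
apply sol2_iff in HB. destruct HB as [w [HyB0 [Hw0 [IyB Iw]]]].
apply sol1_iff in HA. destruct HA as [Hy0 Iy].
assert (CyB : cont_from t0 yB) by (eapply cont_from_primitive; eauto).
assert (Cw : cont_from t0 w) by (eapply cont_from_primitive; eauto).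
assert (Cy : cont_from t0 y) by (eapply cont_from_primitive; eauto).
set (z1 s := (yB s - a0 s * y s) / a1 s) in *.
set (z2 s := (w s - Derive a0 s * y s - (a0 s + Derive a1 s) * z1 s) / a1 s).
assert (Cz1 : cont_from t0 z1) by (unfold z1; solve_cont_from).
assert (Cz2 : cont_from t0 z2) by (unfold z2; solve_cont_from).
assert (Hz10 : z1 t0 = y1) by (unfold z1; rewrite HyB0, Hy0, E1, E0; field; apply Ha1nz; lra).
apply sol3_iff. exists z1, z2. rewrite Hy0, Hz10. do 2 (split; auto). split.
{ unfold z2. rewrite Hz10, Hw0, Hy0, E2, E0. field. apply Ha1nz; lra. }
split; [exact Iy|].
split; [apply (primitive_cont_from t0); auto; intros; apply is_derive_sol1_deriv; auto|].
apply (primitive_pwc t0 _ _ x (fun s => / c3 s)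
         (fun s => - (c2 s * z2 s + c1 s * z1 s + c0 s * y s) / c3 s));
  try solve_cont_from; [exact Hx | |].
- intros u Hu. field. auto.
- intros u Hu Hxu. assert (Hu' : t0 <= u) by lra.
  assert (dw : is_derive w u ((x u - b1 u * w u - b0 u * yB u) / b2 u)).
  { apply (primitive_is_derive_forced t0 w _ x (fun s => / b2 s)
             (fun s => - (b1 s * w s + b0 s * yB s) / b2 s) u Iw);
      try solve_cont_from; auto. intros s Hs. field. auto. }
  pose proof (is_derive_sol1_deriv yB w y u Iy IyB Cw Hu) as dz1.
  change (is_derive z1 u (z2 u)) in dz1.
  pose proof (primitive_is_derive_cont_from t0 y z1 u Iy Cz1 Hu) as dy.
  destruct (Ha1 u Hu'), (Ha0 u Hu').
  destruct (Hdec u Hu') as [_ [K3 [K2 [K1 K0]]]]. unfold BA3, BA2, BA1, BA0 in *.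
  pose proof (Ha1nz u Hu'). pose proof (Hb2nz u Hu').
  assert (EyB : yB u = a1 u * z1 u + a0 u * y u) by (unfold z1; field; auto).
  unfold z2. auto_derive; repeat split; try (eexists; eassumption); auto.
  eta_Derive. rewrite (is_derive_unique _ _ _ dz1), (is_derive_unique _ _ _ dy),
    (is_derive_unique _ _ _ dw).
  rewrite EyB. rewrite <- K3, <- K2, <- K1, <- K0. unfold z2. field. auto.
Qed.

Lemma outAB_taylor2_init (y0 y1 y2 yA0 yB0 yB1 : R) (x : R -> R) :
  outAB t0 a1 a0 b2 b1 b0 yA0 yB0 yB1 x (taylor2 t0 y0 y1 y2) ->
  AB_init b2 b1 b0 t0 y0 y1 y2 yA0 yB0 yB1.
Proof.
intros [yA [HA HB]].
apply sol1_iff in HA. destruct HA as [HyA0 IA].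
apply sol2_iff in HB. destruct HB as [z [Hy0 [Hz0 [Iy Iz]]]].
set (y := taylor2 t0 y0 y1 y2) in *.
set (z1 s := y1 + y2 * (s - t0)).
set (z2 s := (yA s - b1 s * z s - b0 s * y s) / b2 s) in *.
assert (Cy : cont_from t0 y)
  by (apply cont_from_ex_derive; intros; eexists; apply is_derive_taylor2).
assert (Cz : cont_from t0 z) by (eapply cont_from_primitive; eauto).
assert (CyA : cont_from t0 yA) by (eapply cont_from_primitive; eauto).
assert (Cz2 : cont_from t0 z2) by (unfold z2; solve_cont_from).
assert (Ez : forall s, t0 < s -> z s = z1 s).
{ intros s Hs. apply (is_derive_eq y s).
  - apply (primitive_is_derive_cont_from t0); auto.
  - apply is_derive_taylor2. }
assert (Ez2 : forall s, t0 < s -> z2 s = y2).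
{ intros s Hs. apply (is_derive_eq z s).
  - apply (primitive_is_derive_cont_from t0); auto.
  - apply (is_derive_ext_loc z1).
    + generalize (locally_gt t0 s Hs). apply filter_imp. intros v Hv. symmetry. apply Ez, Hv.
    + unfold z1. auto_derive; auto. lra. }
assert (Hz0' : z t0 = y1).
{ replace y1 with (z1 t0) by (unfold z1; ring).
  apply (cont_from_eq_at t0); [exact Cz | unfold z1; solve_cont_from | exact Ez]. }
assert (Hz20 : z2 t0 = y2)
  by (apply (cont_from_eq_at t0 z2 (fun _ => y2)); [exact Cz2 | solve_cont_from | exact Ez2]).
assert (Hy0' : y t0 = y0) by (unfold y, taylor2; field).
unfold z2 in Hz20. rewrite Hz0', Hy0' in Hz20.
pose proof (Hb2nz t0 (Rle_refl t0)).
split; [|split]; [congruence | congruence |].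
rewrite <- HyA0, <- Hz20. field. auto.
Qed.

Lemma outBA_taylor2_init (y0 y1 y2 yA0 yB0 yB1 : R) (x : R -> R) :
  outBA t0 a1 a0 b2 b1 b0 yA0 yB0 yB1 x (taylor2 t0 y0 y1 y2) ->
  BA_init a1 a0 t0 y0 y1 y2 yA0 yB0 yB1.
Proof.
intros [yB [HB HA]].
apply sol2_iff in HB. destruct HB as [w [HyB0 [Hw0 [IyB Iw]]]].
apply sol1_iff in HA. destruct HA as [Hy0 Iy].
set (y := taylor2 t0 y0 y1 y2) in *.
set (z1 s := y1 + y2 * (s - t0)).
set (Ay s := a1 s * z1 s + a0 s * y s).
set (dAy s := Derive a1 s * z1 s + a1 s * y2 + Derive a0 s * y s + a0 s * z1 s).
assert (Cy : cont_from t0 y)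
  by (apply cont_from_ex_derive; intros; eexists; apply is_derive_taylor2).
assert (Cz1 : cont_from t0 z1) by (unfold z1; solve_cont_from).
assert (CyB : cont_from t0 yB) by (eapply cont_from_primitive; eauto).
assert (Cw : cont_from t0 w) by (eapply cont_from_primitive; eauto).
assert (EyB : forall s, t0 < s -> yB s = Ay s).
{ intros s Hs. assert (Hs' : t0 <= s) by lra. pose proof (Ha1nz s Hs').
  assert (E : (yB s - a0 s * y s) / a1 s = z1 s).
  { apply (is_derive_eq y s).
    - apply (primitive_is_derive_cont_from t0 y (fun s => (yB s - a0 s * y s) / a1 s));
        auto; solve_cont_from.
    - apply is_derive_taylor2. }
  unfold Ay. rewrite <- E. field. auto. }
assert (Ew : forall s, t0 < s -> w s = dAy s).
{ intros s Hs. assert (Hs' : t0 <= s) by lra. apply (is_derive_eq yB s).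
  - apply (primitive_is_derive_cont_from t0); auto.
  - apply (is_derive_ext_loc Ay).
    + generalize (locally_gt t0 s Hs). apply filter_imp. intros v Hv. symmetry. apply EyB, Hv.
    + destruct (Ha1 s Hs'), (Ha0 s Hs').
      assert (dy : is_derive y s (z1 s)) by apply is_derive_taylor2.
      unfold Ay, dAy, z1 in *. auto_derive; repeat split; try (eexists; eassumption); auto.
      eta_Derive. rewrite (is_derive_unique _ _ _ dy). ring. }
assert (HyB0' : yB t0 = Ay t0) by (apply (cont_from_eq_at t0); auto; unfold Ay; solve_cont_from).
assert (Hw0' : w t0 = dAy t0) by (apply (cont_from_eq_at t0); auto; unfold dAy; solve_cont_from).
assert (Hy0' : y t0 = y0) by (unfold y, taylor2; field).
assert (Hz10 : z1 t0 = y1) by (unfold z1; ring).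
unfold Ay in HyB0'. unfold dAy in Hw0'. rewrite Hy0', Hz10 in HyB0', Hw0'.
split; [|split]; congruence.
Qed.

Lemma outC_taylor2 (y0 y1 y2 : R) :
  exists x, pwc t0 x /\ outC t0 c3 c2 c1 c0 y0 y1 y2 x (taylor2 t0 y0 y1 y2).
Proof.
set (y := taylor2 t0 y0 y1 y2).
set (z1 s := y1 + y2 * (s - t0)).
assert (dy : forall s, is_derive y s (z1 s)) by (intros; apply is_derive_taylor2).
assert (Cy : cont_from t0 y) by (apply cont_from_ex_derive; intros; eexists; apply dy).
assert (Cz1 : cont_from t0 z1) by (unfold z1; solve_cont_from).
exists (fun s => c2 s * y2 + c1 s * z1 s + c0 s * y s).
split; [apply pwc_cont_from; solve_cont_from|].
apply sol3_iff. exists z1, (fun _ => y2).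
split; [unfold y, taylor2; field|]. split; [unfold z1; ring|]. split; [reflexivity|].
split; [apply (primitive_cont_from t0); auto|].
split; [apply (primitive_cont_from t0); [exact Cz1 | solve_cont_from |];
        intros u _; unfold z1; auto_derive; auto; ring|].
apply (primitive_ext t0 _ (fun _ => 0)).
- intros s Hs. field. auto.
- apply (primitive_cont_from t0); try solve_cont_from.
  intros u _. apply (is_derive_const y2).
Qed.

Lemma decomposed_ic_iff_init (y0 y1 y2 yA0 yB0 yB1 : R) :
  decomposed_ic t0 c3 c2 c1 c0 a1 a0 b2 b1 b0 y0 y1 y2 yA0 yB0 yB1 <->
  AB_init b2 b1 b0 t0 y0 y1 y2 yA0 yB0 yB1 /\ BA_init a1 a0 t0 y0 y1 y2 yA0 yB0 yB1.
Proof.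
split.
- intros [_ [DAB DBA]]. destruct (outC_taylor2 y0 y1 y2) as [x [Hx HC]]. split.
  + apply (outAB_taylor2_init _ _ _ _ _ _ x), DAB; auto.
  + apply (outBA_taylor2_init _ _ _ _ _ _ x), DBA; auto.
- intros [HAB HBA].
  split; [|split]; intros x Hx y; split; intros H.
  + apply (outC_outBA y0 y1 y2); auto. apply (outAB_outC _ _ _ yA0 yB0 yB1); auto.
  + apply (outC_outAB y0 y1 y2); auto. apply (outBA_outC _ _ _ yA0 yB0 yB1); auto.
  + apply (outAB_outC _ _ _ yA0 yB0 yB1); auto.
  + apply (outC_outAB y0 y1 y2); auto.
  + apply (outBA_outC _ _ _ yA0 yB0 yB1); auto.
  + apply (outC_outBA y0 y1 y2); auto.
Qed.

End Cascades.


Lemma comm_init_iff (t0 e2 e1 e0 y0 y1 y2 yA0 yB0 yB1 : R) (a1 a0 : R -> R) :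
  ex_derive a1 t0 -> ex_derive a0 t0 -> a1 t0 <> 0 -> y0 <> 0 ->
  (AB_init (comm_b2 e2 a1) (comm_b1 e2 e1 a1 a0) (comm_b0 e2 e1 e0 a1 a0)
     t0 y0 y1 y2 yA0 yB0 yB1 /\ BA_init a1 a0 t0 y0 y1 y2 yA0 yB0 yB1 <->
   e2 + e1 + e0 = 1 /\ yA0 = y0 /\ yB0 = y0 /\
   y1 = fixed_logderiv a1 a0 t0 * y0 /\ yB1 = fixed_logderiv a1 a0 t0 * y0 /\
   y2 = (fixed_logderiv a1 a0 t0 ^ 2 + Derive (fixed_logderiv a1 a0) t0) * y0).
Proof.
intros Ha1 Ha0 Ha1nz Hy0.
assert (HP' : Derive (fixed_logderiv a1 a0) t0
              = (- Derive a0 t0 * a1 t0 - (1 - a0 t0) * Derive a1 t0) / a1 t0 ^ 2).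
{ apply is_derive_unique. unfold fixed_logderiv.
  auto_derive; repeat split; auto. eta_Derive. field. auto. }
rewrite HP'. unfold AB_init, BA_init, comm_b2, comm_b1, comm_b0, fixed_logderiv.
set (a := a1 t0) in *. set (b := a0 t0). set (d1 := Derive a1 t0). set (d0 := Derive a0 t0).
set (P := (1 - b) / a). set (P' := (- d0 * a - (1 - b) * d1) / a ^ 2).
assert (F1 : a * (P * y0) + b * y0 = y0) by (unfold P; field; auto).
assert (F2 : d1 * (P * y0) + a * ((P ^ 2 + P') * y0) + d0 * y0 + b * (P * y0) = P * y0)
  by (unfold P, P'; field; auto).
assert (F3 : e2 * a ^ 2 * ((P ^ 2 + P') * y0) + (e2 * (d1 + 2 * b) * a + e1 * a) * (P * y0)
             + (e2 * (d0 * a + b ^ 2) + e1 * b + e0) * y0 = (e2 + e1 + e0) * y0)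
  by (unfold P, P'; field; auto).
split.
- intros [[G0 [G1 G2]] [K0 [K1 K2]]].
  assert (E1 : y1 = P * y0).
  { replace y1 with (a * y1 / a) by (field; auto).
    replace (a * y1) with ((1 - b) * y0) by lra. unfold P. field. auto. }
  rewrite E1 in G1, G2, K2.
  assert (E2 : y2 = (P ^ 2 + P') * y0) by (apply (Rmult_eq_reg_l a); [lra | auto]).
  rewrite E2 in G2.
  assert (S : e2 + e1 + e0 = 1) by (apply (Rmult_eq_reg_r y0); [lra | auto]).
  repeat split; auto; congruence.
- intros [S [Ea [Eb [Ec [Ed Ee]]]]]. rewrite Ec, Ee.
  repeat split; [lra | lra | rewrite F3, S; lra | lra | lra | lra].
Qed.

Section CoefficientsFrom.

Variables (t0 : R) (a1 a0 b2 b1 b0 a1' a0' b2' b1' b0' : R -> R).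
Hypothesis Heq : forall s, t0 <= s ->
  a1 s = a1' s /\ a0 s = a0' s /\ b2 s = b2' s /\ b1 s = b1' s /\ b0 s = b0' s.

Lemma sol1_ext_from (x : R -> R) (y0 : R) (y : R -> R) :
  sol1 t0 a1 a0 x y0 y <-> sol1 t0 a1' a0' x y0 y.
Proof.
rewrite !sol1_iff. split; intros [E I]; (split; [exact E|]); revert I;
  apply primitive_ext; intros s Hs; destruct (Heq s Hs) as [-> [-> _]]; reflexivity.
Qed.

Lemma sol2_ext_from (x : R -> R) (y0 y1 : R) (y : R -> R) :
  sol2 t0 b2 b1 b0 x y0 y1 y <-> sol2 t0 b2' b1' b0' x y0 y1 y.
Proof.
rewrite !sol2_iff. split; intros [z [E0 [E1 [Iy Iz]]]]; exists z; do 3 (split; auto); revert Iz;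
  apply primitive_ext; intros s Hs; destruct (Heq s Hs) as [_ [_ [-> [-> ->]]]]; reflexivity.
Qed.

Lemma outAB_ext_from (yA0 yB0 yB1 : R) (x y : R -> R) :
  outAB t0 a1 a0 b2 b1 b0 yA0 yB0 yB1 x y <-> outAB t0 a1' a0' b2' b1' b0' yA0 yB0 yB1 x y.
Proof.
split; intros [yA [HA HB]]; exists yA;
  [rewrite <- sol1_ext_from, <- sol2_ext_from | rewrite sol1_ext_from, sol2_ext_from]; auto.
Qed.

Lemma outBA_ext_from (yA0 yB0 yB1 : R) (x y : R -> R) :
  outBA t0 a1 a0 b2 b1 b0 yA0 yB0 yB1 x y <-> outBA t0 a1' a0' b2' b1' b0' yA0 yB0 yB1 x y.
Proof.
split; intros [yB [HB HA]]; exists yB;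
  [rewrite <- sol1_ext_from, <- sol2_ext_from | rewrite sol1_ext_from, sol2_ext_from]; auto.
Qed.

Lemma decomposed_ic_ext_from (c3 c2 c1 c0 : R -> R) (y0 y1 y2 yA0 yB0 yB1 : R) :
  decomposed_ic t0 c3 c2 c1 c0 a1 a0 b2 b1 b0 y0 y1 y2 yA0 yB0 yB1 <->
  decomposed_ic t0 c3 c2 c1 c0 a1' a0' b2' b1' b0' y0 y1 y2 yA0 yB0 yB1.
Proof.
split; intros [D1 [D2 D3]]; (split; [|split]); intros x Hx y;
  [rewrite <- outAB_ext_from, <- outBA_ext_from | rewrite <- outAB_ext_from
  | rewrite <- outBA_ext_from | rewrite outAB_ext_from, outBA_ext_from
  | rewrite outAB_ext_from | rewrite outBA_ext_from]; auto.
Qed.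

End CoefficientsFrom.

Theorem theorem1 (t0 : R) (c3 c2 c1 c0 : R -> R)
  (Hc3s : smooth_from t0 c3) (Hc2s : smooth_from t0 c2)
  (Hc1s : smooth_from t0 c1) (Hc0s : smooth_from t0 c0)
  (Hc3 : forall t, t0 <= t -> c3 t <> 0) :
  ( (exists a1 a0 b2 b1 b0 : R -> R,
        diff2_from t0 a1 /\ diff2_from t0 a0 /\
        diff1_from t0 b2 /\ diff1_from t0 b1 /\ diff1_from t0 b0 /\
        (forall t, t0 <= t -> a1 t <> 0) /\ (forall t, t0 <= t -> b2 t <> 0) /\
        decomposed_eq t0 c3 c2 c1 c0 a1 a0 b2 b1 b0)
    <->
    (exists e2 e1 e0 : R, e2 <> 0 /\ coeff_cond t0 c3 c2 c1 c0 e2 e1 e0) )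
  /\
  (forall e2 e1 e0 : R, e2 <> 0 -> coeff_cond t0 c3 c2 c1 c0 e2 e1 e0 ->
   forall y0 y1 y2 yA0 yB0 yB1 : R, y0 <> 0 ->
     ( decomposed_ic t0 c3 c2 c1 c0
         (a1f e2 c3) (a0f e2 e1 c3 c2)
         (b2f e2 c3) (b1f e2 e1 c3 c2) (b0f e2 e1 e0 c3 c2)
         y0 y1 y2 yA0 yB0 yB1
       <->
       e2 + e1 + e0 = 1 /\
       yA0 = y0 /\ yB0 = y0 /\
       y1 = Pf e2 e1 c3 c2 t0 * y0 /\ yB1 = Pf e2 e1 c3 c2 t0 * y0 /\
       y2 = ((Pf e2 e1 c3 c2 t0) ^ 2 + Derive (Pf e2 e1 c3 c2) t0) * y0 )).
Proof.
split.
- split.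
  + intros [a1 [a0 [b2 [b1 [b0 H]]]]].
    apply (coeff_cond_of_decomposed t0 c3 c2 c1 c0 a1 a0 b2 b1 b0); tauto.
  + intros [e2 [e1 [e0 [He2 Hcc]]]].
    set (a1 := a1_ext t0 e2 c3). set (a0 := a0_ext t0 e2 e1 c3 c2).
    exists a1, a0, (comm_b2 e2 a1), (comm_b1 e2 e1 a1 a0), (comm_b0 e2 e1 e0 a1 a0).
    apply comm_ext_decomposes; auto.
- intros e2 e1 e0 He2 Hcc y0 y1 y2 yA0 yB0 yB1 Hy0.
  set (a1 := a1_ext t0 e2 c3). set (a0 := a0_ext t0 e2 e1 c3 c2).
  destruct (comm_ext_decomposes t0 e2 e1 e0 c3 c2 c1 c0 Hc3s Hc2s Hc3 He2 Hcc)
    as [Ha1 [Ha0 [Hb2 [Hb1 [Hb0 [Ha1nz [Hb2nz Hdec]]]]]]].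
  assert (Ccont : forall c, smooth_from t0 c -> cont_from t0 c)
    by (intros c Hc; apply cont_from_ex_derive; intros t Ht; apply (Hc 0%nat t Ht)).
  rewrite (decomposed_ic_ext_from t0 _ _ _ _ _ a1 a0 (comm_b2 e2 a1)
             (comm_b1 e2 e1 a1 a0) (comm_b0 e2 e1 e0 a1 a0))
    by (intros s Hs; apply coefficients_ext_from, Hs).
  rewrite decomposed_ic_iff_init by auto.
  destruct (Ha1 t0 (Rle_refl t0)), (Ha0 t0 (Rle_refl t0)).
  pose proof (Ha1nz t0 (Rle_refl t0)).
  rewrite comm_init_iff by auto.
  rewrite (Pf_eq t0 e2 e1 c3 c2 Hc3 He2 t0 (Rle_refl t0)).
  rewrite (Derive_ext_from (Pf e2 e1 c3 c2) (fixed_logderiv a1 a0))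
    by (intros s Hs; apply (Pf_eq t0 e2 e1 c3 c2 Hc3 He2 s Hs)).
  reflexivity.
Qed.
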